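(* Let $u_0\in H^s(\mathbb R)$ with $s$ large enough that the quantities below are finite, $T>0$, $c>0$, $\Delta t,\Delta x>0$, $\theta\in[0,\frac12)$ with $\Delta t(1-2\theta)\le\frac{\Delta x^3}{4}$. For every $n\in\{0,\dots,N-1\}$ and every $\gamma\in[0,\frac12)$, $$\begin{aligned}\|\mathcal A_\theta e^{n+1}\|^2_{\ell^2_\Delta}\le{}&\|\mathcal A_\theta e^n\|^2_{\ell^2_\Delta}[1+E_a\Delta t]+\Delta t\|\epsilon^n\|^2_{\ell^2_\Delta}\Big\{1+4\frac{\Delta t}{\Delta x}+\Delta t\Big\}+\Delta t\langle C_b,[D_+(e)^n]^2\rangle\\&+\Delta t^2C_c\|D(e)^n\|^2_{\ell^2_\Delta}+\Delta tC_d\|D_+D_-(e)^n\|^2_{\ell^2_\Delta}+\Delta tC_e\|D_+D(e)^n\|^2_{\ell^2_\Delta},\end{aligned}$$ where, with $U=\|[u_\Delta]^n\|_{\ell^\infty}$, $U_\pm=\|D_\pm([u_\Delta])^n\|_{\ell^\infty}$, $E=\|e^n\|_{\ell^\infty}$, $X=\Delta x^{\frac12-\gamma}+E+9E^2\Delta x^{\gamma-\frac12}$, $\mathbf 1=(1,1,\dots)$: $$E_a=U^2\Big(1+\frac{\Delta t}{\Delta x}\Big)+U_+\Big(7+\frac{\Delta t}{\Delta x}\Big[2c+\frac23E+\frac32U\Big]\Big)+U_+^2\Big[\sqrt2\frac{\sqrt{\Delta t}}{\sqrt{\Delta x}}+\frac{\Delta t^2}{\Delta x^2}\Big]+1+2c^2\frac{\Delta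 t}{\Delta x},$$ $$C_b=\Big(\frac{\Delta x}{6}D_+(e)^n-c\mathbf 1\Big)(\Delta x-c\Delta t)+(1-\theta)\Delta tU_+\mathbf 1,\qquad C_c=U^2+\Big\{E^2[1+\Delta x]+2EU+\frac{2c}{3}E\Big\}-c^2,$$ $$C_d=\frac{4}{\Delta x^2}\Big\{\Delta t\Big[(1-2\theta)+\frac{(1-\theta)\Delta x^2}{2}\Big[c+\frac X2\Big]+\Delta t(1-\theta)U_++\frac{(1-\theta)\Delta x^2}{4}\Big\{U_++\frac{\Delta x}{2}U_-\Big\}\Big]-\frac{\Delta x^3}{4}\Big\},$$ $$C_e=2(1-\theta)\Delta t\Big\{U+E+\frac X2\Big\}-\frac{4\Delta t}{\Delta x^2}\Big\{(1-2\theta)+\frac{(1-\theta)\Delta x^2}{2}\Big[c+\frac X2\Big]+\Delta t(1-\theta)U_+\Big\}.$$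
   Context: KdV equation $\partial_t u+\partial_x(u^2/2)+\partial_x^3u=0$ with datum $u_0$ and exact solution $u$. $t^n=n\Delta t$, $x_j=j\Delta x$, $N=\lfloor T/\Delta t\rfloor$. For sequences: $D_+(a)_j=(a_{j+1}-a_j)/\Delta x$, $D_-(a)_j=(a_j-a_{j-1})/\Delta x$, $D=\frac12(D_++D_-)$; products and powers componentwise; $\langle a,b\rangle=\Delta x\sum_ja_jb_j$, $\|a\|_{\ell^2_\Delta}=\langle a,a\rangle^{1/2}$, $\|a\|_{\ell^\infty}=\sup_j|a_j|$. $\mathcal A_\theta=I+\theta\Delta tD_+D_+D_-$. Scheme with parameters $c,\theta$: $\frac{v^{n+1}_j-v^n_j}{\Delta t}+D(\frac{v^2}{2})^n_j+\theta D_+D_+D_-(v)^{n+1}_j+(1-\theta)D_+D_+D_-(v)^n_j=\frac{c\Delta x}{2}D_+D_-(v)^n_j$, with $v^0_j=\frac1{\Delta x}\int_{x_j}^{x_{j+1}}u_0$. Averaged exact solution $[u_\Delta]^0_j=\frac1{\Delta x}\int_{x_j}^{x_{j+1}}u_0$, $[u_\Delta]^n_j=\frac{1}{\Delta x(\min(t^{n+1},T)-t^n)}\int_{t^n}^{\min(t^{n+1},T)}\int_{x_j}^{x_{j+1}}u\,dy\,ds$ for $n\ge1$. Error $e^n_j=v^n_j-[u_\Delta]^n_j$. Consistency error $\epsilon^n_j=\frac{[u_\Delta]^{n+1}_j-[u_\Delta]^n_j}{\Delta t}+D(\frac{[u_\Delta]^2}{2})^n_j+\theta D_+D_+D_-([u_\Delta])^{n+1}_j+(1-\theta)D_+D_+D_-([u_\Delta])^n_j-\frac{c\Delta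 x}{2}D_+D_-([u_\Delta])^n_j$. *)

From Stdlib Require Import Reals ZArith.
From Coquelicot Require Import Coquelicot.
Open Scope R_scope.

Definition seqZ := Z -> R.

Definition Dp (dx : R) (a : seqZ) : seqZ := fun j => (a (j + 1)%Z - a j) / dx.
Definition Dm (dx : R) (a : seqZ) : seqZ := fun j => (a j - a (j - 1)%Z) / dx.
Definition Dc (dx : R) (a : seqZ) : seqZ := fun j => (Dp dx a j + Dm dx a j) / 2.

(* sum over Z of a sequence (meaningful when absolutely summable) *)
Definition sumZ (a : seqZ) : R :=
  Series (fun k => a (Z.of_nat k)) + Series (fun k => a (- Z.of_nat (S k))%Z).

Definition summableZ (a : seqZ) : Prop :=
  ex_series (fun k => Rabs (a (Z.of_nat k))) /\
  ex_series (fun k => Rabs (a (- Z.of_nat (S k))%Z)).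

Definition innerD (dx : R) (a b : seqZ) : R := dx * sumZ (fun j => a j * b j).
Definition normD (dx : R) (a : seqZ) : R := sqrt (innerD dx a a).

Definition in_l2 (a : seqZ) : Prop := summableZ (fun j => a j ^ 2).
Definition boundedZ (a : seqZ) : Prop := exists M, forall j, Rabs (a j) <= M.
Definition norminf (a : seqZ) : R :=
  real (Lub_Rbar (fun r => exists j, r = Rabs (a j))).

Definition D3 (dx : R) (a : seqZ) : seqZ := Dp dx (Dp dx (Dm dx a)).
Definition Atheta (dx dt th : R) (a : seqZ) : seqZ :=
  fun j => a j + th * dt * D3 dx a j.

(* Classical rendering of H^s(R), s a natural number: f has derivatives up
   to order s, each square integrable over R. *)
Definition Hs (s : nat) (f : R -> R) : Prop :=
  forall k, (k <= s)%nat ->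
    (forall x, ex_derive_n f k x) /\
    ex_RInt_gen (fun x => (Derive_n f k x) ^ 2)
      (Rbar_locally m_infty) (Rbar_locally p_infty).

Definition KdV_solution (s : nat) (T : R) (u0 : R -> R) (u : R -> R -> R) : Prop :=
  (forall x, u 0 x = u0 x) /\
  (forall t x, 0 <= t <= T ->
     continuous (fun p : R * R => u (fst p) (snd p)) (t, x)) /\
  (forall t, 0 <= t <= T -> Hs s (u t)) /\
  (forall t x, 0 < t < T ->
     ex_derive (fun s => u s x) t /\
     ex_derive (fun y => u t y ^ 2 / 2) x /\
     ex_derive_n (fun y => u t y) 3 x /\
     Derive (fun s => u s x) t + Derive (fun y => u t y ^ 2 / 2) x
       + Derive_n (fun y => u t y) 3 x = 0).

Definition tgrid (dt : R) (n : nat) : R := INR n * dt.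
Definition xgrid (dx : R) (j : Z) : R := IZR j * dx.

Definition Nsteps (T dt : R) : nat := Z.to_nat (Int_part (T / dt)).

Definition avg0 (dx : R) (u0 : R -> R) : seqZ :=
  fun j => RInt u0 (xgrid dx j) (xgrid dx (j + 1)) / dx.

Definition uavg (T dt dx : R) (u0 : R -> R) (u : R -> R -> R) (n : nat) : seqZ :=
  match n with
  | O => avg0 dx u0
  | S _ => fun j =>
      RInt (fun s => RInt (fun y => u s y) (xgrid dx j) (xgrid dx (j + 1)))
           (tgrid dt n) (Rmin (tgrid dt (S n)) T)
      / (dx * (Rmin (tgrid dt (S n)) T - tgrid dt n))
  end.

Definition scheme (dt dx c th : R) (v : nat -> seqZ) : Prop :=
  forall n j,
    (v (S n) j - v n j) / dt + Dc dx (fun i => v n i ^ 2 / 2) j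
    + th * D3 dx (v (S n)) j + (1 - th) * D3 dx (v n) j
    = c * dx / 2 * Dp dx (Dm dx (v n)) j.

Definition cons_err (dt dx c th : R) (w : nat -> seqZ) (n : nat) : seqZ :=
  fun j =>
    (w (S n) j - w n j) / dt + Dc dx (fun i => w n i ^ 2 / 2) j
    + th * D3 dx (w (S n)) j + (1 - th) * D3 dx (w n) j
    - c * dx / 2 * Dp dx (Dm dx (w n)) j.

Definition Xc (dx g E : R) : R :=
  Rpower dx (1/2 - g) + E + 9 * E ^ 2 * Rpower dx (g - 1/2).

Definition Ea (dt dx c U Up E : R) : R :=
  U ^ 2 * (1 + dt / dx)
  + Up * (7 + dt / dx * (2 * c + 2/3 * E + 3/2 * U))
  + Up ^ 2 * (sqrt 2 * sqrt dt / sqrt dx + dt ^ 2 / dx ^ 2)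
  + 1 + 2 * c ^ 2 * dt / dx.

Definition Cb (dt dx c th Up : R) (e : seqZ) : seqZ :=
  fun j => (dx / 6 * Dp dx e j - c) * (dx - c * dt) + (1 - th) * dt * Up.

Definition Cc (dx c U E : R) : R :=
  U ^ 2 + (E ^ 2 * (1 + dx) + 2 * E * U + 2 * c / 3 * E) - c ^ 2.

Definition Cd (dt dx c th Up Um X : R) : R :=
  4 / dx ^ 2 *
  (dt * ((1 - 2 * th) + (1 - th) * dx ^ 2 / 2 * (c + X / 2)
         + dt * (1 - th) * Up
         + (1 - th) * dx ^ 2 / 4 * (Up + dx / 2 * Um))
   - dx ^ 3 / 4).

Definition Ce (dt dx c th U Up E X : R) : R :=
  2 * (1 - th) * dt * (U + E + X / 2)
  - 4 * dt / dx ^ 2 *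
    ((1 - 2 * th) + (1 - th) * dx ^ 2 / 2 * (c + X / 2) + dt * (1 - th) * Up).

(* The error e^n = v^n - [u_Δ]^n obeys the scheme with the consistency error as a source:
     A_θ e^(n+1) = e^n - Δt N - (1-θ) Δt D₊D₊D₋ e^n + (cΔx/2) Δt D₊D₋ e^n - Δt ε^n,
   where N = D([u_Δ]^n e^n) + D((e^n)²/2) is the difference of the discrete fluxes.
   Squaring and summing over the grid, each cross term is either computed exactly by a
   summation by parts or bounded by a pointwise inequality up to a telescoping remainder, in
   terms of the sup norms of [u_Δ]^n, D±[u_Δ]^n and e^n.  The only term of indefinite sign left
   is ‖D₊D₊D₋e‖² = 4/Δx² (‖D₊D₋e‖² - ‖D₊De‖²), which the condition Δt(1-2θ) ≤ Δx³/4 controls,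
   and 7E ≤ X absorbs the last dispersive cross term. *)

From Stdlib Require Import Reals ZArith Lra Lia.
From Coquelicot Require Import Coquelicot.
Open Scope R_scope.

(** * Sums over Z *)

Lemma Series_nonneg (a : nat -> R) :
  (forall n, 0 <= a n) -> ex_series a -> 0 <= Series a.
Proof.
  intros Ha Hex.
  assert (H0 : Series (fun _ => 0) = 0).
  { rewrite (Series_ext _ (fun n => 0 * a n)) by (intros; ring).
    rewrite Series_scal_l; ring. }
  rewrite <- H0. apply Series_le; [intros n; split; [lra | apply Ha] | exact Hex].
Qed.

Lemma Series_ge_term (a : nat -> R) :
  (forall n, 0 <= a n) -> ex_series a -> forall n, a n <= Series a.
Proof.
  intros Ha Hex n; revert a Ha Hex; induction n as [|n IH]; intros a Ha Hex;
    rewrite Series_incr_1 by exact Hex;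
    apply ex_series_incr_1 in Hex.
  - pose proof (Series_nonneg _ (fun k => Ha (S k)) Hex); lra.
  - pose proof (IH _ (fun k => Ha (S k)) Hex); pose proof (Ha O); lra.
Qed.

Lemma ex_series_Rle (a b : nat -> R) :
  (forall n, Rabs (a n) <= b n) -> ex_series b -> ex_series a.
Proof. intros Hab Hb; exact (ex_series_le a b Hab Hb). Qed.

Lemma summableZ_ex (f : seqZ) : summableZ f ->
  ex_series (fun k => f (Z.of_nat k)) /\ ex_series (fun k => f (- Z.of_nat (S k))%Z).
Proof. intros [Hp Hn]; split; apply ex_series_Rabs; assumption. Qed.

Lemma summableZ_le (f g : seqZ) :
  (forall j, Rabs (f j) <= g j) -> summableZ g -> summableZ f.
Proof.
  intros Hfg [Hp Hn]; split.
  - apply (ex_series_Rle _ (fun k => Rabs (g (Z.of_nat k)))); [|exact Hp].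
    intros k; rewrite Rabs_Rabsolu; eapply Rle_trans; [apply Hfg | apply Rle_abs].
  - apply (ex_series_Rle _ (fun k => Rabs (g (- Z.of_nat (S k))%Z))); [|exact Hn].
    intros k; rewrite Rabs_Rabsolu; eapply Rle_trans; [apply Hfg | apply Rle_abs].
Qed.

Lemma summableZ_plus (f g : seqZ) :
  summableZ f -> summableZ g -> summableZ (fun j => f j + g j).
Proof.
  intros [Fp Fn] [Gp Gn]; split.
  - apply (ex_series_Rle _ (fun k => Rabs (f (Z.of_nat k)) + Rabs (g (Z.of_nat k)))).
    + intros k; rewrite Rabs_Rabsolu; apply Rabs_triang.
    + exact (ex_series_plus _ _ Fp Gp).
  - apply (ex_series_Rle _
             (fun k => Rabs (f (- Z.of_nat (S k))%Z) + Rabs (g (- Z.of_nat (S k))%Z))).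
    + intros k; rewrite Rabs_Rabsolu; apply Rabs_triang.
    + exact (ex_series_plus _ _ Fn Gn).
Qed.

Lemma summableZ_scal (c : R) (f : seqZ) : summableZ f -> summableZ (fun j => c * f j).
Proof.
  intros [Fp Fn]; split.
  - apply (ex_series_Rle _ (fun k => Rabs c * Rabs (f (Z.of_nat k)))).
    + intros k; rewrite Rabs_Rabsolu, Rabs_mult; apply Rle_refl.
    + exact (ex_series_scal_l _ _ Fp).
  - apply (ex_series_Rle _ (fun k => Rabs c * Rabs (f (- Z.of_nat (S k))%Z))).
    + intros k; rewrite Rabs_Rabsolu, Rabs_mult; apply Rle_refl.
    + exact (ex_series_scal_l _ _ Fn).
Qed.

Lemma summableZ_ext (f g : seqZ) : (forall j, f j = g j) -> summableZ f -> summableZ g.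
Proof.
  intros Hfg [Hp Hn];
    split; [eapply ex_series_ext; [|exact Hp] | eapply ex_series_ext; [|exact Hn]];
    intros k; cbv beta; rewrite Hfg; reflexivity.
Qed.

Lemma summableZ_opp (f : seqZ) : summableZ f -> summableZ (fun j => - f j).
Proof.
  intros; apply (summableZ_ext (fun j => -1 * f j)); [intros; ring | now apply summableZ_scal].
Qed.

Lemma summableZ_minus (f g : seqZ) :
  summableZ f -> summableZ g -> summableZ (fun j => f j - g j).
Proof.
  intros; apply (summableZ_ext (fun j => f j + - g j)); [intros; ring|].
  now apply summableZ_plus, summableZ_opp.
Qed.

Lemma summableZ_div (f : seqZ) (c : R) : summableZ f -> summableZ (fun j => f j / c).
Proof.
  intros; apply (summableZ_ext (fun j => / c * f j));
    [intros; unfold Rdiv; ring | now apply summableZ_scal].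
Qed.

Lemma summableZ_shift_succ (f : seqZ) : summableZ f -> summableZ (fun j => f (j + 1)%Z).
Proof.
  intros [Hp Hn]; split.
  - apply ex_series_incr_1 in Hp; eapply ex_series_ext; [|exact Hp].
    intros k; cbv beta; do 2 f_equal; lia.
  - apply (ex_series_incr_1 (fun k => Rabs (f (- Z.of_nat k)%Z))) in Hn.
    eapply ex_series_ext; [|exact Hn]; intros k; cbv beta; do 2 f_equal; lia.
Qed.

Lemma summableZ_shift_pred (f : seqZ) : summableZ f -> summableZ (fun j => f (j - 1)%Z).
Proof.
  intros [Hp Hn]; split.
  - apply (ex_series_incr_1 (fun k => Rabs (f (Z.of_nat k - 1)%Z))).
    eapply ex_series_ext; [|exact Hp]; intros k; cbv beta; do 2 f_equal; lia.
  - apply ex_series_incr_1 in Hn; eapply ex_series_ext; [|exact Hn].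
    intros k; cbv beta; do 2 f_equal; lia.
Qed.

Lemma summableZ_shift (f : seqZ) (m : Z) : summableZ f -> summableZ (fun j => f (j + m)%Z).
Proof.
  intros Hf; destruct (Z_le_gt_dec 0 m) as [Hm|Hm].
  - rewrite <- (Z2Nat.id m) by exact Hm; induction (Z.to_nat m) as [|n IH].
    + eapply summableZ_ext; [|exact Hf]; intros; simpl; f_equal; lia.
    + eapply summableZ_ext; [|exact (summableZ_shift_succ _ IH)]; intros; simpl; f_equal; lia.
  - replace m with (- Z.of_nat (Z.to_nat (- m)))%Z by lia; induction (Z.to_nat (- m)) as [|n IH].
    + eapply summableZ_ext; [|exact Hf]; intros; simpl; f_equal; lia.
    + eapply summableZ_ext; [|exact (summableZ_shift_pred _ IH)]; intros; simpl; f_equal; lia.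
Qed.

Lemma sumZ_ext (f g : seqZ) : (forall j, f j = g j) -> sumZ f = sumZ g.
Proof. intros Hfg; unfold sumZ; rewrite !(Series_ext _ _ (fun k => Hfg _)); reflexivity. Qed.

Lemma sumZ_plus (f g : seqZ) :
  summableZ f -> summableZ g -> sumZ (fun j => f j + g j) = sumZ f + sumZ g.
Proof.
  intros Hf Hg; destruct (summableZ_ex f Hf), (summableZ_ex g Hg); unfold sumZ.
  rewrite !Series_plus by assumption; ring.
Qed.

Lemma sumZ_scal (c : R) (f : seqZ) : sumZ (fun j => c * f j) = c * sumZ f.
Proof. unfold sumZ; rewrite !Series_scal_l; ring. Qed.

Lemma sumZ_minus (f g : seqZ) :
  summableZ f -> summableZ g -> sumZ (fun j => f j - g j) = sumZ f - sumZ g.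
Proof.
  intros Hf Hg; rewrite (sumZ_ext _ (fun j => f j + -1 * g j)) by (intros; ring).
  rewrite sumZ_plus, sumZ_scal by (try apply summableZ_scal; assumption); ring.
Qed.

Lemma sumZ_nonneg (f : seqZ) : summableZ f -> (forall j, 0 <= f j) -> 0 <= sumZ f.
Proof.
  intros Hf H; destruct (summableZ_ex f Hf); unfold sumZ.
  apply Rplus_le_le_0_compat; apply Series_nonneg; auto.
Qed.

Lemma sumZ_le (f g : seqZ) :
  summableZ f -> summableZ g -> (forall j, f j <= g j) -> sumZ f <= sumZ g.
Proof.
  intros Hf Hg H.
  assert (0 <= sumZ (fun j => g j - f j)).
  { apply sumZ_nonneg; [now apply summableZ_minus | intros j; specialize (H j); lra]. }
  rewrite sumZ_minus in H0 by assumption; lra.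
Qed.

Lemma sumZ_shift_succ (f : seqZ) : summableZ f -> sumZ (fun j => f (j + 1)%Z) = sumZ f.
Proof.
  intros Hf; destruct (summableZ_ex f Hf) as [Hp Hn]; unfold sumZ.
  assert (Hn' : ex_series (fun k => f (- Z.of_nat k)%Z)) by (apply ex_series_incr_1; exact Hn).
  rewrite (Series_ext (fun k => f (Z.of_nat k + 1)%Z) (fun k => f (Z.of_nat (S k))))
    by (intros; f_equal; lia).
  rewrite (Series_ext (fun k => f (- Z.of_nat (S k) + 1)%Z) (fun k => f (- Z.of_nat k)%Z))
    by (intros; f_equal; lia).
  rewrite (Series_incr_1 (fun k => f (Z.of_nat k))) by exact Hp.
  rewrite (Series_incr_1 (fun k => f (- Z.of_nat k)%Z)) by exact Hn'.
  simpl; ring.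
Qed.

Lemma sumZ_telescope (T : seqZ) : summableZ T -> sumZ (fun j => T (j + 1)%Z - T j) = 0.
Proof.
  intros HT.
  rewrite sumZ_minus, sumZ_shift_succ by (try apply summableZ_shift_succ; exact HT); ring.
Qed.

Lemma sumZ_le_telescope (f g T : seqZ) :
  summableZ f -> summableZ g -> summableZ T ->
  (forall j, f j <= g j + (T (j + 1)%Z - T j)) -> sumZ f <= sumZ g.
Proof.
  intros Hf Hg HT H.
  assert (HT' : summableZ (fun j => T (j + 1)%Z - T j))
    by (apply summableZ_minus; [apply summableZ_shift_succ|]; exact HT).
  rewrite <- (Rplus_0_r (sumZ g)), <- (sumZ_telescope T HT), <- sumZ_plus by assumption.
  apply sumZ_le; [| apply summableZ_plus |]; assumption.
Qed.

Lemma sumZ_eq_telescope (f g T : seqZ) :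
  summableZ f -> summableZ g -> summableZ T ->
  (forall j, f j = g j + (T (j + 1)%Z - T j)) -> sumZ f = sumZ g.
Proof.
  intros Hf Hg HT H; apply Rle_antisym.
  - apply (sumZ_le_telescope f g T); auto; intros j; rewrite H; lra.
  - apply (sumZ_le_telescope g f (fun j => - T j)); auto using summableZ_opp.
    intros j; rewrite H; lra.
Qed.

(** * Square-summable and bounded grid functions *)

Lemma l2_plus (f g : seqZ) : in_l2 f -> in_l2 g -> in_l2 (fun j => f j + g j).
Proof.
  intros Hf Hg; apply (summableZ_le _ (fun j => 2 * f j ^ 2 + 2 * g j ^ 2)).
  - intros j; rewrite Rabs_right by apply Rle_ge, pow2_ge_0.
    pose proof (pow2_ge_0 (f j - g j)); nra.
  - apply summableZ_plus; apply summableZ_scal; assumption.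
Qed.

Lemma l2_scal (c : R) (f : seqZ) : in_l2 f -> in_l2 (fun j => c * f j).
Proof.
  intros Hf; apply (summableZ_ext (fun j => c ^ 2 * f j ^ 2)); [intros; ring|].
  now apply summableZ_scal.
Qed.

Lemma l2_opp (f : seqZ) : in_l2 f -> in_l2 (fun j => - f j).
Proof. apply summableZ_ext; intros; ring. Qed.

Lemma l2_minus (f g : seqZ) : in_l2 f -> in_l2 g -> in_l2 (fun j => f j - g j).
Proof. intros; apply (l2_plus f (fun j => - g j)); [|apply l2_opp]; assumption. Qed.

Lemma l2_div (f : seqZ) (c : R) : in_l2 f -> in_l2 (fun j => f j / c).
Proof.
  intros; apply (summableZ_ext (fun j => (/ c * f j) ^ 2));
    [intros; unfold Rdiv; ring | now apply l2_scal].
Qed.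

Lemma l2_shift (f : seqZ) (m : Z) : in_l2 f -> in_l2 (fun j => f (j + m)%Z).
Proof. apply (summableZ_shift (fun j => f j ^ 2)). Qed.

Lemma l2_shift_sub (f : seqZ) (m : Z) : in_l2 f -> in_l2 (fun j => f (j - m)%Z).
Proof.
  intros; apply (summableZ_ext (fun j => f (j + - m)%Z ^ 2)); [intros; do 2 f_equal; lia|].
  now apply l2_shift.
Qed.

Lemma summableZ_mul_l2 (f g : seqZ) : in_l2 f -> in_l2 g -> summableZ (fun j => f j * g j).
Proof.
  intros Hf Hg; apply (summableZ_le _ (fun j => / 2 * f j ^ 2 + / 2 * g j ^ 2)).
  - intros j; rewrite Rabs_mult, <- (pow2_abs (f j)), <- (pow2_abs (g j)).
    pose proof (pow2_ge_0 (Rabs (f j) - Rabs (g j))); nra.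
  - apply summableZ_plus; apply summableZ_scal; assumption.
Qed.

Lemma summableZ_bounded_mul (f g : seqZ) :
  boundedZ f -> summableZ g -> summableZ (fun j => f j * g j).
Proof.
  intros [M HM] Hg; apply (summableZ_le _ (fun j => M * Rabs (g j))).
  - intros j; rewrite Rabs_mult; apply Rmult_le_compat_r; [apply Rabs_pos | apply HM].
  - apply summableZ_scal, (summableZ_le _ (fun j => Rabs (g j)));
      [intros; rewrite Rabs_Rabsolu; lra|].
    destruct Hg as [Gp Gn]; split;
      [eapply ex_series_ext; [|exact Gp] | eapply ex_series_ext; [|exact Gn]];
      intros; cbv beta; rewrite Rabs_Rabsolu; reflexivity.
Qed.

Lemma summableZ_mul_bounded (f g : seqZ) :
  boundedZ g -> summableZ f -> summableZ (fun j => f j * g j).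
Proof.
  intros; apply (summableZ_ext (fun j => g j * f j));
    [intros; ring | now apply summableZ_bounded_mul].
Qed.

Lemma boundedZ_plus (f g : seqZ) : boundedZ f -> boundedZ g -> boundedZ (fun j => f j + g j).
Proof.
  intros [M HM] [N HN]; exists (M + N); intros j.
  eapply Rle_trans; [apply Rabs_triang | specialize (HM j); specialize (HN j); lra].
Qed.

Lemma boundedZ_mul (f g : seqZ) : boundedZ f -> boundedZ g -> boundedZ (fun j => f j * g j).
Proof.
  intros [M HM] [N HN]; exists (M * N); intros j; rewrite Rabs_mult.
  apply Rmult_le_compat; auto using Rabs_pos.
Qed.

Lemma boundedZ_const (c : R) : boundedZ (fun _ => c).
Proof. exists (Rabs c); intros; lra. Qed.

Lemma boundedZ_opp (f : seqZ) : boundedZ f -> boundedZ (fun j => - f j).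
Proof. intros [M HM]; exists M; intros j; rewrite Rabs_Ropp; auto. Qed.

Lemma boundedZ_minus (f g : seqZ) : boundedZ f -> boundedZ g -> boundedZ (fun j => f j - g j).
Proof. intros; apply (boundedZ_plus f (fun j => - g j)); [|apply boundedZ_opp]; assumption. Qed.

Lemma boundedZ_div (f : seqZ) (c : R) : boundedZ f -> boundedZ (fun j => f j / c).
Proof. intros; apply (boundedZ_mul f (fun _ => / c)); [|apply boundedZ_const]; assumption. Qed.

Lemma boundedZ_pow (f : seqZ) (n : nat) : boundedZ f -> boundedZ (fun j => f j ^ n).
Proof.
  intros [M HM]; exists (M ^ n); intros j; rewrite <- RPow_abs.
  apply pow_incr; split; [apply Rabs_pos | apply HM].
Qed.

Lemma boundedZ_shift (f : seqZ) (m : Z) : boundedZ f -> boundedZ (fun j => f (j + m)%Z).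
Proof. intros [M HM]; exists M; auto. Qed.

Lemma boundedZ_shift_sub (f : seqZ) (m : Z) : boundedZ f -> boundedZ (fun j => f (j - m)%Z).
Proof. intros [M HM]; exists M; auto. Qed.

Lemma l2_bounded_mul (f g : seqZ) : boundedZ f -> in_l2 g -> in_l2 (fun j => f j * g j).
Proof.
  intros Hf Hg; apply (summableZ_ext (fun j => f j ^ 2 * g j ^ 2)); [intros; ring|].
  apply summableZ_bounded_mul; [apply boundedZ_pow |]; assumption.
Qed.

Lemma l2_mul_bounded (f g : seqZ) : boundedZ g -> in_l2 f -> in_l2 (fun j => f j * g j).
Proof.
  intros; apply (summableZ_ext (fun j => (g j * f j) ^ 2));
    [intros; ring | now apply l2_bounded_mul].
Qed.

Lemma l2_boundedZ (f : seqZ) : in_l2 f -> boundedZ f.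
Proof.
  intros Hf; destruct (summableZ_ex _ Hf) as [Hp Hn].
  set (B := Series (fun k => f (Z.of_nat k) ^ 2) + Series (fun k => f (- Z.of_nat (S k))%Z ^ 2)).
  assert (Hsq : forall j, f j ^ 2 <= B).
  { pose proof (Series_nonneg _ (fun _ => pow2_ge_0 _) Hp).
    pose proof (Series_nonneg _ (fun _ => pow2_ge_0 _) Hn).
    intros j; destruct (Z_le_gt_dec 0 j).
    - pose proof (Series_ge_term _ (fun _ => pow2_ge_0 _) Hp (Z.to_nat j)) as Hj.
      cbv beta in Hj; rewrite Z2Nat.id in Hj by lia; unfold B; lra.
    - pose proof (Series_ge_term _ (fun _ => pow2_ge_0 _) Hn (Z.to_nat (- j - 1))) as Hj.
      cbv beta in Hj; replace (- Z.of_nat (S (Z.to_nat (- j - 1))))%Z with j in Hj by lia.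
      unfold B; lra. }
  exists (1 + B); intros j; specialize (Hsq j).
  rewrite <- (pow2_abs (f j)) in Hsq; pose proof (Rabs_pos (f j)); nra.
Qed.

Lemma l2_sq (f : seqZ) : in_l2 f -> in_l2 (fun j => f j ^ 2).
Proof.
  intros Hf; apply (summableZ_ext (fun j => (f j * f j) ^ 2)); [intros; ring|].
  apply l2_bounded_mul; [apply l2_boundedZ|]; assumption.
Qed.

Lemma summableZ_cube (f : seqZ) : in_l2 f -> summableZ (fun j => f j ^ 3).
Proof.
  intros Hf; apply (summableZ_ext (fun j => f j * f j ^ 2)); [intros; ring|].
  apply summableZ_bounded_mul; [apply l2_boundedZ|]; assumption.
Qed.

Lemma norminf_ge (f : seqZ) : boundedZ f -> forall j, Rabs (f j) <= norminf f.
Proof.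
  intros [M HM] j; unfold norminf.
  destruct (Lub_Rbar_correct (fun r => exists j, r = Rabs (f j))) as [Hub Hlub].
  assert (Hle : Rbar_le (Lub_Rbar (fun r => exists j, r = Rabs (f j))) M)
    by (apply Hlub; intros x [i ->]; apply HM).
  specialize (Hub (Rabs (f j)) (ex_intro _ j eq_refl)).
  destruct (Lub_Rbar (fun r => exists j, r = Rabs (f j))); simpl in *; easy.
Qed.

Definition avgc (a : seqZ) : seqZ := fun j => (a (j + 1)%Z + a (j - 1)%Z) / 2.

Definition flux (h : R) (w a : seqZ) : seqZ :=
  fun j => Dc h (fun i => w i * a i) j + Dc h (fun i => a i ^ 2 / 2) j.

Lemma l2_Dp (h : R) (a : seqZ) : in_l2 a -> in_l2 (Dp h a).
Proof. intros; apply l2_div, l2_minus; [apply l2_shift|]; assumption. Qed.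

Lemma l2_Dm (h : R) (a : seqZ) : in_l2 a -> in_l2 (Dm h a).
Proof. intros; apply l2_div, l2_minus; [|apply l2_shift_sub]; assumption. Qed.

Lemma l2_Dc (h : R) (a : seqZ) : in_l2 a -> in_l2 (Dc h a).
Proof. intros; apply l2_div, l2_plus; [apply l2_Dp | apply l2_Dm]; assumption. Qed.

Lemma l2_D3 (h : R) (a : seqZ) : in_l2 a -> in_l2 (D3 h a).
Proof. intros; apply l2_Dp, l2_Dp, l2_Dm; assumption. Qed.

Lemma l2_avgc (a : seqZ) : in_l2 a -> in_l2 (avgc a).
Proof. intros; apply l2_div, l2_plus; [apply l2_shift | apply l2_shift_sub]; assumption. Qed.

Lemma boundedZ_Dp (h : R) (a : seqZ) : boundedZ a -> boundedZ (Dp h a).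
Proof. intros; apply boundedZ_div, boundedZ_minus; [apply boundedZ_shift|]; assumption. Qed.

Lemma boundedZ_Dm (h : R) (a : seqZ) : boundedZ a -> boundedZ (Dm h a).
Proof. intros; apply boundedZ_div, boundedZ_minus; [|apply boundedZ_shift_sub]; assumption. Qed.

Lemma boundedZ_Dc (h : R) (a : seqZ) : boundedZ a -> boundedZ (Dc h a).
Proof.
  intros; apply boundedZ_div, boundedZ_plus; [apply boundedZ_Dp | apply boundedZ_Dm]; assumption.
Qed.

Lemma boundedZ_D3 (h : R) (a : seqZ) : boundedZ a -> boundedZ (D3 h a).
Proof. intros; apply boundedZ_Dp, boundedZ_Dp, boundedZ_Dm; assumption. Qed.

Lemma boundedZ_avgc (a : seqZ) : boundedZ a -> boundedZ (avgc a).
Proof.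
  intros; apply boundedZ_div, boundedZ_plus; [apply boundedZ_shift | apply boundedZ_shift_sub];
    assumption.
Qed.

Ltac bounded_tac :=
  lazymatch goal with
  | |- boundedZ (fun j => _ + _) => apply boundedZ_plus; bounded_tac
  | |- boundedZ (fun j => _ - _) => apply boundedZ_minus; bounded_tac
  | |- boundedZ (fun j => - _) => apply boundedZ_opp; bounded_tac
  | |- boundedZ (fun j => _ / _) => apply boundedZ_div; bounded_tac
  | |- boundedZ (fun j => _ * _) => apply boundedZ_mul; bounded_tac
  | |- boundedZ (fun j => _ ^ _) => apply boundedZ_pow; bounded_tac
  | |- boundedZ (fun j => ?f (j + _)%Z) => apply (boundedZ_shift f); bounded_tac
  | |- boundedZ (fun j => ?f (j - _)%Z) => apply (boundedZ_shift_sub f); bounded_tac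
  | |- boundedZ (fun j => ?f j) => change (boundedZ f); bounded_tac
  | |- boundedZ (Dp _ _) => apply boundedZ_Dp; bounded_tac
  | |- boundedZ (Dm _ _) => apply boundedZ_Dm; bounded_tac
  | |- boundedZ (Dc _ _) => apply boundedZ_Dc; bounded_tac
  | |- boundedZ (D3 _ _) => apply boundedZ_D3; bounded_tac
  | |- boundedZ (avgc _) => apply boundedZ_avgc; bounded_tac
  | |- boundedZ _ => first [assumption | apply l2_boundedZ; assumption | apply boundedZ_const]
  end.

Ltac l2_tac :=
  lazymatch goal with
  | |- in_l2 (fun j => _ + _) => apply l2_plus; l2_tac
  | |- in_l2 (fun j => _ - _) => apply l2_minus; l2_tac
  | |- in_l2 (fun j => - _) => apply l2_opp; l2_tac
  | |- in_l2 (fun j => _ / _) => apply l2_div; l2_tac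
  | |- in_l2 (fun j => _ * _) =>
      first [ apply l2_scal; l2_tac
            | apply l2_bounded_mul; [bounded_tac | l2_tac]
            | apply l2_mul_bounded; [bounded_tac | l2_tac] ]
  | |- in_l2 (fun j => _ ^ 2) => apply l2_sq; l2_tac
  | |- in_l2 (fun j => ?f (j + _)%Z) => apply (l2_shift f); l2_tac
  | |- in_l2 (fun j => ?f (j - _)%Z) => apply (l2_shift_sub f); l2_tac
  | |- in_l2 (fun j => ?f j) => change (in_l2 f); l2_tac
  | |- in_l2 (Dp _ _) => apply l2_Dp; l2_tac
  | |- in_l2 (Dm _ _) => apply l2_Dm; l2_tac
  | |- in_l2 (Dc _ _) => apply l2_Dc; l2_tac
  | |- in_l2 (D3 _ _) => apply l2_D3; l2_tac
  | |- in_l2 (avgc _) => apply l2_avgc; l2_tac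
  | |- in_l2 (flux _ _ _) => unfold flux; l2_tac
  | |- in_l2 _ => assumption
  end.

Ltac summable_tac :=
  first [ assumption |
  lazymatch goal with
  | |- summableZ (fun j => _ + _) => apply summableZ_plus; summable_tac
  | |- summableZ (fun j => _ - _) => apply summableZ_minus; summable_tac
  | |- summableZ (fun j => - _) => apply summableZ_opp; summable_tac
  | |- summableZ (fun j => _ / _) => apply summableZ_div; summable_tac
  | |- summableZ (fun j => @?f j ^ 2) => change (in_l2 f); l2_tac
  | |- summableZ (fun j => _ ^ 3) => apply summableZ_cube; l2_tac
  | |- summableZ (fun j => _ * _) =>
      first [ apply summableZ_scal; summable_tac
            | apply summableZ_mul_l2; l2_tac
            | apply summableZ_bounded_mul; [bounded_tac | summable_tac]
            | apply summableZ_mul_bounded; [bounded_tac | summable_tac] ]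
  end ].

Ltac is_Zlit c := lazymatch c with Z0 => idtac | Zpos _ => idtac | Zneg _ => idtac end.

(* [field] treats [a (j + 1 + 1)] and [a (j + 2)] as distinct atoms. *)
Ltac normalize_indices :=
  unfold Z.sub;
  repeat match goal with
  | |- context [Z.opp ?c] =>
      is_Zlit c; let v := eval compute in (Z.opp c) in change (Z.opp c) with v
  | |- context [(?x + ?c1 + ?c2)%Z] =>
      is_Zlit c1; is_Zlit c2; let v := eval compute in (c1 + c2)%Z in
      replace (x + c1 + c2)%Z with (x + v)%Z by (rewrite <- Z.add_assoc; reflexivity)
  | |- context [(?x + 0)%Z] => rewrite Z.add_0_r
  end.

Ltac unfold_grid := cbv beta; unfold flux, D3, Dc, Dp, Dm, avgc; normalize_indices.

Ltac sumZ_linear :=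
  repeat first [ rewrite sumZ_plus by summable_tac
               | rewrite sumZ_minus by summable_tac
               | rewrite sumZ_scal ].

Section SummationByParts.

Variables (h : R) (a : seqZ).
Hypotheses (Hh : 0 < h) (Ha : in_l2 a).

(* The remainders [T] below come from summation by parts: [T] solves
   [F j - G j = T (j + 1) - T j] among forms in the neighbouring grid values. *)
Ltac telescope_to G T :=
  transitivity (sumZ G);
  [ apply (sumZ_eq_telescope _ _ T); [summable_tac | summable_tac | summable_tac |];
    intros j; unfold_grid; field; lra
  | sumZ_linear; ring ].

Lemma sumZ_mul_DpDm :
  sumZ (fun j => a j * Dp h (Dm h a) j) = - sumZ (fun j => Dp h a j ^ 2).
Proof.
  telescope_to (fun j => -1 * Dp h a j ^ 2) (fun i => a i * Dm h a i / h).
Qed.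

Lemma sumZ_mul_D3 :
  sumZ (fun j => a j * D3 h a j) = h / 2 * sumZ (fun j => Dp h (Dm h a) j ^ 2).
Proof.
  telescope_to (fun j => h / 2 * Dp h (Dm h a) j ^ 2)
    (fun i => (- 2 * a (i - 1)%Z * a i + 2 * a (i - 1)%Z * a (i + 1)%Z
               + a (i - 1)%Z ^ 2 - a i ^ 2) / (2 * h ^ 3)).
Qed.

Lemma sumZ_D3_mul_DpDm :
  sumZ (fun j => D3 h a j * Dp h (Dm h a) j) = - (h / 2) * sumZ (fun j => D3 h a j ^ 2).
Proof.
  telescope_to (fun j => - (h / 2) * D3 h a j ^ 2) (fun i => Dp h (Dm h a) i ^ 2 / (2 * h)).
Qed.

Lemma sumZ_D3_sq :
  sumZ (fun j => D3 h a j ^ 2)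
  = 4 / h ^ 2 * (sumZ (fun j => Dp h (Dm h a) j ^ 2) - sumZ (fun j => Dp h (Dc h a) j ^ 2)).
Proof.
  telescope_to (fun j => 4 / h ^ 2 * Dp h (Dm h a) j ^ 2 - 4 / h ^ 2 * Dp h (Dc h a) j ^ 2)
    (fun i => 2 * Dp h (Dm h a) i ^ 2 / h ^ 2).
Qed.

Lemma sumZ_Dp_sq :
  sumZ (fun j => Dp h a j ^ 2)
  = sumZ (fun j => Dc h a j ^ 2) + h ^ 2 / 4 * sumZ (fun j => Dp h (Dm h a) j ^ 2).
Proof.
  telescope_to (fun j => Dc h a j ^ 2 + h ^ 2 / 4 * Dp h (Dm h a) j ^ 2)
    (fun i => Dm h a i ^ 2 / 2).
Qed.

Lemma sumZ_mul_Dc_sq :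
  sumZ (fun j => a j * Dc h (fun i => a i ^ 2 / 2) j)
  = - (h ^ 2 / 12) * sumZ (fun j => Dp h a j ^ 3).
Proof.
  telescope_to (fun j => - (h ^ 2 / 12) * Dp h a j ^ 3)
    (fun i => (3 * a (i - 1)%Z ^ 2 * a i + a i ^ 3) / (12 * h)).
Qed.

Lemma sumZ_DpDm_mul_Dc_sq :
  sumZ (fun j => Dp h (Dm h a) j * Dc h (fun i => a i ^ 2 / 2) j)
  = - (2 / 3) * sumZ (fun j => Dc h a j ^ 3) + 1 / 6 * sumZ (fun j => Dp h a j ^ 3).
Proof.
  telescope_to (fun j => - (2 / 3) * Dc h a j ^ 3 + 1 / 6 * Dp h a j ^ 3)
    (fun i => Dm h a i ^ 2 * (a i + 2 * a (i - 1)%Z) / (6 * h)).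
Qed.

Lemma sumZ_sq_add_D3 (t : R) :
  sumZ (fun j => (a j + t * D3 h a j) ^ 2)
  = sumZ (fun j => a j ^ 2) + t * h * sumZ (fun j => Dp h (Dm h a) j ^ 2)
    + t ^ 2 * sumZ (fun j => D3 h a j ^ 2).
Proof.
  rewrite (sumZ_ext _ (fun j => a j ^ 2 + 2 * t * (a j * D3 h a j) + t ^ 2 * D3 h a j ^ 2))
    by (intros; ring).
  sumZ_linear; rewrite sumZ_mul_D3; field; lra.
Qed.

End SummationByParts.

(** * Pointwise inequalities *)

Ltac nonneg :=
  repeat first [ lra | apply pow2_ge_0 | apply Rmult_le_pos | apply Rplus_le_le_0_compat
               | apply pow_le | left; apply Rinv_0_lt_compat | apply pow_lt ].

Lemma young_abs (d M x y : R) : Rabs d <= M -> d * x * y <= M * (x ^ 2 + y ^ 2) / 2.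
Proof.
  intros H; apply Rabs_le_between in H.
  assert (0 <= (M + d) * (x - y) ^ 2) by (apply Rmult_le_pos; [lra | apply pow2_ge_0]).
  assert (0 <= (M - d) * (x + y) ^ 2) by (apply Rmult_le_pos; [lra | apply pow2_ge_0]).
  nra.
Qed.

Lemma mul_sq_le_abs (d M x : R) : Rabs d <= M -> d * x ^ 2 <= M * x ^ 2.
Proof. intros H; apply Rabs_le_between in H; pose proof (pow2_ge_0 x); nra. Qed.

Lemma sq_avg_le (x y : R) : ((x + y) / 2) ^ 2 <= (x ^ 2 + y ^ 2) / 2.
Proof. pose proof (pow2_ge_0 (x - y)); nra. Qed.

Lemma Rabs_half_sum_le (x y M : R) : Rabs x <= M -> Rabs y <= M -> Rabs ((x + y) / 2) <= M.
Proof.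
  intros Hx Hy; apply Rabs_le_between in Hx, Hy; apply Rabs_le_between; lra.
Qed.

Lemma sq_plus_le_weighted (h N e : R) :
  0 < h -> (N + e) ^ 2 <= (1 + h / 2) * N ^ 2 + (1 + 2 / h) * e ^ 2.
Proof.
  intros Hh.
  assert (0 <= (h * N - 2 * e) ^ 2 / (2 * h))
    by (apply Rmult_le_pos; [apply pow2_ge_0 | left; apply Rinv_0_lt_compat; lra]).
  replace ((1 + h / 2) * N ^ 2 + (1 + 2 / h) * e ^ 2)
    with ((N + e) ^ 2 + (h * N - 2 * e) ^ 2 / (2 * h)) by (field; lra).
  lra.
Qed.

Lemma viscous_cross_le (h c am a0 ap e : R) : 0 < h ->
  - c * h * ((ap - 2 * a0 + am) / h ^ 2) * e
  <= / h * (c ^ 2 / 2 * (ap ^ 2 + 2 * a0 ^ 2 + am ^ 2) + 2 * e ^ 2).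
Proof.
  intros Hh; set (L := ap - 2 * a0 + am).
  assert (HL : L ^ 2 <= 4 * (ap ^ 2 + 2 * a0 ^ 2 + am ^ 2)).
  { unfold L; pose proof (pow2_ge_0 (ap + a0)); pose proof (pow2_ge_0 (a0 + am));
      pose proof (pow2_ge_0 (ap - am)); nra. }
  assert (Hc : - c * L * e <= c ^ 2 * L ^ 2 / 8 + 2 * e ^ 2)
    by (pose proof (pow2_ge_0 (c * L / 2 + 2 * e)); nra).
  replace (- c * h * (L / h ^ 2) * e) with (/ h * (- c * L * e)) by (field; lra).
  apply Rmult_le_compat_l; [left; apply Rinv_0_lt_compat; lra|].
  pose proof (pow2_ge_0 c); nra.
Qed.

Lemma dispersive_advection_le (k Up s x y d : R) : 0 < k -> Rabs d <= Up ->
  2 * s * ((x + y) / 2) * d <= k * Up * s ^ 2 + Up / k * ((x ^ 2 + y ^ 2) / 2).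
Proof.
  intros Hk Hd.
  pose proof (young_abs d Up (k * s) ((x + y) / 2) Hd) as Hy.
  pose proof (sq_avg_le x y) as Havg.
  assert (0 <= Up) by (pose proof (Rabs_pos d); lra).
  apply Rmult_le_reg_l with k; [exact Hk|].
  replace (k * (k * Up * s ^ 2 + Up / k * ((x ^ 2 + y ^ 2) / 2)))
    with (k ^ 2 * Up * s ^ 2 + Up * ((x ^ 2 + y ^ 2) / 2)) by (field; lra).
  nra.
Qed.

(* The left-hand sides here and in [dispersive_self_le] are the summands of
   [sumZ_D3_avgc_w_Dc_le] and [sumZ_D3_avgc_Dc_le] after summation by parts. *)
Lemma dispersive_transport_le (h U Up Um qm q0 wm w0 wp pm pmm : R) : 0 < h ->
  Rabs w0 <= U -> Rabs (wp - w0) <= h * Um -> Rabs (w0 - wm) <= h * Up ->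
  - w0 * (q0 + qm) ^ 2 / 2 - q0 ^ 2 * (w0 - wp) / 2 - 2 / h * q0 * ((pm + pmm) / 2) * (w0 - wm)
  <= 2 * U * ((qm + q0) / 2) ^ 2 + (h * Um / 2 + Up) * q0 ^ 2 + Up * (pm ^ 2 + pmm ^ 2) / 2.
Proof.
  intros Hh H0 Hp Hm; set (p := (pm + pmm) / 2).
  assert (A : - w0 * (q0 + qm) ^ 2 <= U * (q0 + qm) ^ 2)
    by (apply mul_sq_le_abs; rewrite Rabs_Ropp; exact H0).
  assert (B : (wp - w0) * q0 ^ 2 <= h * Um * q0 ^ 2) by (apply mul_sq_le_abs; exact Hp).
  assert (C : - 2 / h * q0 * p * (w0 - wm) <= Up * (q0 ^ 2 + p ^ 2)).
  { pose proof (young_abs (- (w0 - wm)) (h * Up) q0 p) as Y; rewrite Rabs_Ropp in Y.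
    replace (- 2 / h * q0 * p * (w0 - wm)) with (2 / h * (- (w0 - wm) * q0 * p)) by (field; lra).
    replace (Up * (q0 ^ 2 + p ^ 2)) with (2 / h * (h * Up * (q0 ^ 2 + p ^ 2) / 2)) by (field; lra).
    apply Rmult_le_compat_l; [apply Rlt_le, Rdiv_lt_0_compat|]; auto; lra. }
  assert (D : Up * p ^ 2 <= Up * ((pm ^ 2 + pmm ^ 2) / 2)).
  { apply Rmult_le_compat_l; [|apply sq_avg_le].
    pose proof (Rabs_pos (w0 - wm)); nra. }
  replace (2 * U * ((qm + q0) / 2) ^ 2) with (U * (q0 + qm) ^ 2 / 2) by field.
  unfold p in *; lra.
Qed.

Lemma dispersive_self_le (h E am2 am1 a0 a1 a2 : R) : 0 < h ->
  Rabs am2 <= E -> Rabs am1 <= E -> Rabs a0 <= E -> Rabs a1 <= E -> Rabs a2 <= E ->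
  let qm := (a0 - 2 * am1 + am2) / h ^ 2 in
  let q0 := (a1 - 2 * a0 + am1) / h ^ 2 in
  let m0 := (a1 + am1) / 2 in
  let m1 := (a2 + a0) / 2 in
  let dm := (a0 - am2) / (2 * h) in
  let d0 := (a1 - am1) / (2 * h) in
  let r := (qm + q0) / 2 in
  - m0 * (q0 + qm) ^ 2 / 2 - q0 ^ 2 * (m0 - m1) / 2 - h * q0 ^ 2 * dm - h ^ 2 / 6 * qm ^ 3
    + 4 * h / 3 * r ^ 2 * (d0 + 2 * dm)
  <= 2 * E * r ^ 2 + 2 * E * q0 ^ 2 + 2 / 3 * E * qm ^ 2 + 2 * E * (qm ^ 2 + q0 ^ 2)
     + 1 / 3 * E * q0 ^ 2.
Proof.
  intros Hh B2 B1 B0 Bp1 Bp2 qm q0 m0 m1 dm d0 r.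
  apply Rabs_le_between in B2, B1, B0, Bp1, Bp2.
  assert (A : - m0 * (q0 + qm) ^ 2 <= E * (q0 + qm) ^ 2)
    by (apply mul_sq_le_abs, Rabs_le_between; unfold m0; lra).
  assert (B : (m1 - m0) * q0 ^ 2 <= 2 * E * q0 ^ 2)
    by (apply mul_sq_le_abs, Rabs_le_between; unfold m0, m1; lra).
  assert (C : - (h * dm) * q0 ^ 2 <= E * q0 ^ 2).
  { apply mul_sq_le_abs, Rabs_le_between; unfold dm.
    replace (- (h * ((a0 - am2) / (2 * h)))) with (- ((a0 - am2) / 2)) by (field; lra); lra. }
  assert (D : - (h ^ 2 * qm) * qm ^ 2 <= 4 * E * qm ^ 2).
  { apply mul_sq_le_abs, Rabs_le_between; unfold qm.
    replace (- (h ^ 2 * ((a0 - 2 * am1 + am2) / h ^ 2))) with (- (a0 - 2 * am1 + am2))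
      by (field; lra); lra. }
  assert (F : h * (d0 + 2 * dm) * r ^ 2 <= 3 * E * r ^ 2).
  { apply mul_sq_le_abs, Rabs_le_between; unfold d0, dm.
    replace (h * ((a1 - am1) / (2 * h) + 2 * ((a0 - am2) / (2 * h))))
      with ((a1 - am1) / 2 + (a0 - am2)) by (field; lra); lra. }
  assert (G : 4 * E * r ^ 2 <= 4 * E * ((qm ^ 2 + q0 ^ 2) / 2))
    by (apply Rmult_le_compat_l; [lra | apply sq_avg_le]).
  assert (R : 2 * E * r ^ 2 = E * (q0 + qm) ^ 2 / 2) by (unfold r; field).
  assert (0 <= E * q0 ^ 2) by (apply Rmult_le_pos; [lra | apply pow2_ge_0]).
  replace (- m0 * (q0 + qm) ^ 2 / 2 - q0 ^ 2 * (m0 - m1) / 2 - h * q0 ^ 2 * dm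
           - h ^ 2 / 6 * qm ^ 3 + 4 * h / 3 * r ^ 2 * (d0 + 2 * dm))
    with (- m0 * (q0 + qm) ^ 2 / 2 + (m1 - m0) * q0 ^ 2 / 2 + - (h * dm) * q0 ^ 2
          + - (h ^ 2 * qm) * qm ^ 2 / 6 + 4 / 3 * (h * (d0 + 2 * dm) * r ^ 2)) by field.
  lra.
Qed.

Section NonlinearFlux.

Variables (h k U E : R).
Hypotheses (Hh : 0 < h) (Hk : 0 < k).

Lemma flux_sq_le_fine (u s e : R) :
  0 <= u <= U -> 0 <= s -> 0 <= e -> s + e <= E ->
  ((U - u + s) * e + s * u) ^ 2
  <= (U + E) ^ 2 * e ^ 2 + (U * u + 2 * E / 3 * u + u ^ 2) * (s ^ 2 + e ^ 2).
Proof.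
  intros Hu Hs He HE.
  assert (i : (U + s) ^ 2 * e ^ 2 <= (U + E) ^ 2 * e ^ 2)
    by (apply Rmult_le_compat_r; [apply pow2_ge_0 | apply pow_incr; lra]).
  assert (ii : 2 * (U + s) * e * u * (s - e) <= U * u * (s ^ 2 + e ^ 2) + 2 * u * s ^ 2 * e).
  { assert (0 <= (U + s) * u * e ^ 2) by nonneg.
    assert (0 <= U * u * (s - e) ^ 2) by nonneg.
    nra. }
  assert (iii : 2 * u * s ^ 2 * e <= 2 / 3 * u * E * (s ^ 2 + e ^ 2)).
  { assert (0 <= s * (s - e) ^ 2) by (apply Rmult_le_pos; [lra | apply pow2_ge_0]).
    assert (0 <= e ^ 3) by (apply pow_le; lra).
    assert (3 * s ^ 2 * e <= (s + e) * (s ^ 2 + e ^ 2)) by nra.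
    assert ((s + e) * (s ^ 2 + e ^ 2) <= E * (s ^ 2 + e ^ 2))
      by (apply Rmult_le_compat_r; [pose proof (pow2_ge_0 s); pose proof (pow2_ge_0 e) |]; lra).
    nra. }
  assert (iv : u ^ 2 * (s - e) ^ 2 <= u ^ 2 * (s ^ 2 + e ^ 2))
    by (apply Rmult_le_compat_l; [apply pow2_ge_0 | nra]).
  replace (((U - u + s) * e + s * u) ^ 2)
    with ((U + s) ^ 2 * e ^ 2 + 2 * (U + s) * e * u * (s - e) + u ^ 2 * (s - e) ^ 2) by ring.
  nra.
Qed.

Lemma flux_sq_le_coarse (u s e : R) :
  0 <= u <= U -> 0 <= s -> 0 <= e -> s + e <= E ->
  ((U - u + s) * e + s * u) ^ 2 <= 2 * (U ^ 2 * e ^ 2 + E ^ 2 * e ^ 2 + U ^ 2 * s ^ 2).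
Proof.
  intros Hu Hs He HE.
  assert (c1 : ((U - u) * e + u * s) ^ 2 <= U * ((U - u) * e ^ 2 + u * s ^ 2)).
  { assert (0 <= (U - u) * u * (e - s) ^ 2) by nonneg.
    nra. }
  assert (c2 : U * ((U - u) * e ^ 2 + u * s ^ 2) <= U ^ 2 * e ^ 2 + U ^ 2 * s ^ 2).
  { assert (0 <= U * u * e ^ 2) by nonneg.
    assert (0 <= U * (U - u) * s ^ 2) by nonneg.
    nra. }
  assert (c3 : (s * e) ^ 2 <= E ^ 2 * e ^ 2).
  { rewrite Rpow_mult_distr; apply Rmult_le_compat_r; [apply pow2_ge_0 | apply pow_incr; lra]. }
  replace ((U - u + s) * e + s * u) with (((U - u) * e + u * s) + s * e) by ring.
  pose proof (pow2_ge_0 (((U - u) * e + u * s) - s * e)); nra.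
Qed.

Lemma flux_sq_le (nu u s e : R) :
  0 <= u <= U -> u <= nu -> 0 <= s -> 0 <= e -> s + e <= E ->
  (1 + h / 2) * ((U - u + s) * e + s * u) ^ 2
  <= ((U + E) ^ 2 + h * E ^ 2) * e ^ 2
     + (U ^ 2 * h ^ 2 / k + U ^ 2 * h + nu * (2 * E / 3 + 3 * U / 2) + nu ^ 2 * k / h ^ 2)
       * (s ^ 2 + e ^ 2).
Proof.
  intros Hu Hun Hs He HE.
  pose proof (flux_sq_le_fine u s e Hu Hs He HE) as Pf.
  pose proof (flux_sq_le_coarse u s e Hu Hs He HE) as Pc.
  set (F := (U - u + s) * e + s * u) in *.
  assert (Hcoef : U * u + 2 * E / 3 * u + u ^ 2 + h * U ^ 2
                  <= U ^ 2 * h ^ 2 / k + U ^ 2 * h + nu * (2 * E / 3 + 3 * U / 2)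
                     + nu ^ 2 * k / h ^ 2).
  { assert (Hamgm : U * nu / 2 <= U ^ 2 * h ^ 2 / k + nu ^ 2 * k / h ^ 2).
    { assert (0 <= (nu * k / h - U * h) ^ 2 / k)
        by (apply Rmult_le_pos; [apply pow2_ge_0 | left; apply Rinv_0_lt_compat; lra]).
      replace ((nu * k / h - U * h) ^ 2 / k)
        with (nu ^ 2 * k / h ^ 2 + U ^ 2 * h ^ 2 / k - 2 * U * nu) in H by (field; lra).
      assert (0 <= U * nu) by nra. lra. }
    assert (u ^ 2 <= U * nu) by nra. assert (U * u <= U * nu) by nra.
    assert (2 * E / 3 * u <= 2 * E / 3 * nu) by nra. nra. }
  assert (0 <= s ^ 2 + e ^ 2) by (pose proof (pow2_ge_0 s); pose proof (pow2_ge_0 e); lra).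
  assert (h * F ^ 2 / 2 <= h * (U ^ 2 * e ^ 2 + E ^ 2 * e ^ 2 + U ^ 2 * s ^ 2)) by nra.
  assert ((U * u + 2 * E / 3 * u + u ^ 2 + h * U ^ 2) * (s ^ 2 + e ^ 2)
          <= (U ^ 2 * h ^ 2 / k + U ^ 2 * h + nu * (2 * E / 3 + 3 * U / 2) + nu ^ 2 * k / h ^ 2)
             * (s ^ 2 + e ^ 2)) by (apply Rmult_le_compat_r; assumption).
  replace ((1 + h / 2) * F ^ 2) with (F ^ 2 + h * F ^ 2 / 2) by field.
  nra.
Qed.

Lemma Rabs_avg_add_half_diff (x y M : R) :
  Rabs x <= M -> Rabs y <= M -> Rabs ((x + y) / 2) + Rabs (x - y) / 2 <= M.
Proof.
  intros Hx Hy; apply Rabs_le_between in Hx, Hy.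
  unfold Rabs; destruct (Rcase_abs ((x + y) / 2)), (Rcase_abs (x - y)); lra.
Qed.

Lemma flux_difference_abs_le (x y W1 W2 : R) :
  Rabs x <= E -> Rabs y <= E -> Rabs W1 <= U -> Rabs W2 <= U ->
  let s := Rabs ((x + y) / 2) in
  let e := Rabs (x - y) / 2 in
  let u := Rabs (W1 - W2) / 2 in
  Rabs (W1 * x - W2 * y + (x ^ 2 - y ^ 2) / 2) <= 2 * ((U - u + s) * e + s * u).
Proof.
  intros Hx Hy HW1 HW2 s e u.
  pose proof (Rabs_avg_add_half_diff W1 W2 U HW1 HW2) as Hm; fold u in Hm.
  replace (W1 * x - W2 * y + (x ^ 2 - y ^ 2) / 2)
    with (((W1 + W2) / 2 + (x + y) / 2) * (x - y) + (x + y) / 2 * (W1 - W2)) by field.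
  eapply Rle_trans; [apply Rabs_triang|]; rewrite !Rabs_mult.
  replace (Rabs (x - y)) with (2 * e) by (unfold e; field).
  replace (Rabs (W1 - W2)) with (2 * u) by (unfold u; field).
  pose proof (Rabs_triang ((W1 + W2) / 2) ((x + y) / 2)) as Htri.
  assert (0 <= e) by (unfold e; pose proof (Rabs_pos (x - y)); lra).
  fold s in Htri |- *.
  assert (Rabs ((W1 + W2) / 2 + (x + y) / 2) * (2 * e) <= (U - u + s) * (2 * e))
    by (apply Rmult_le_compat_r; lra).
  lra.
Qed.

Lemma flux_difference_sq_le (Up x y W1 W2 : R) :
  Rabs x <= E -> Rabs y <= E -> Rabs W1 <= U -> Rabs W2 <= U -> Rabs (W1 - W2) <= 2 * h * Up ->
  (1 + h / 2) * ((W1 * x - W2 * y + (x ^ 2 - y ^ 2) / 2) / (2 * h)) ^ 2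
  <= ((U + E) ^ 2 + h * E ^ 2) * ((x - y) / (2 * h)) ^ 2
     + (U ^ 2 * (1 / k + 1 / h) + Up / h * (2 * E / 3 + 3 * U / 2) + Up ^ 2 * k / h ^ 2)
       * ((x ^ 2 + y ^ 2) / 2).
Proof.
  intros Hx Hy HW1 HW2 Hd.
  pose proof (flux_difference_abs_le x y W1 W2 Hx Hy HW1 HW2) as Habs; cbv zeta in Habs.
  pose proof (Rabs_avg_add_half_diff x y E Hx Hy) as Hse.
  pose proof (Rabs_avg_add_half_diff W1 W2 U HW1 HW2) as Hu.
  set (s := Rabs ((x + y) / 2)) in *; set (e := Rabs (x - y) / 2) in *;
    set (u := Rabs (W1 - W2) / 2) in *; set (F := (U - u + s) * e + s * u) in *.
  assert (Hs : 0 <= s) by apply Rabs_pos.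
  assert (He : 0 <= e) by (unfold e; pose proof (Rabs_pos (x - y)); lra).
  assert (Hu0 : 0 <= u) by (unfold u; pose proof (Rabs_pos (W1 - W2)); lra).
  pose proof (Rabs_pos ((W1 + W2) / 2)).
  pose proof (flux_sq_le (h * Up) u s e ltac:(lra) ltac:(unfold u; lra) Hs He ltac:(lra)) as C.
  fold F in C.
  assert (Hsq : (W1 * x - W2 * y + (x ^ 2 - y ^ 2) / 2) ^ 2 <= (2 * F) ^ 2).
  { rewrite <- pow2_abs; apply pow_incr; split; [apply Rabs_pos | exact Habs]. }
  assert (Hxy : (x ^ 2 + y ^ 2) / 2 = s ^ 2 + e ^ 2).
  { unfold s, e; replace ((Rabs (x - y) / 2) ^ 2) with (Rabs (x - y) ^ 2 / 4) by field.
    rewrite !pow2_abs; field. }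
  assert (Hd2 : ((x - y) / (2 * h)) ^ 2 = e ^ 2 / h ^ 2).
  { unfold e; replace ((Rabs (x - y) / 2) ^ 2) with (Rabs (x - y) ^ 2 / 4) by field.
    rewrite pow2_abs; field; lra. }
  rewrite Hxy, Hd2.
  apply Rmult_le_reg_r with (h ^ 2); [apply pow_lt; lra|].
  replace ((1 + h / 2) * ((W1 * x - W2 * y + (x ^ 2 - y ^ 2) / 2) / (2 * h)) ^ 2 * h ^ 2)
    with ((1 + h / 2) * (W1 * x - W2 * y + (x ^ 2 - y ^ 2) / 2) ^ 2 / 4) by (field; lra).
  eapply Rle_trans; [|eapply Rle_trans; [exact C | right; field; lra]].
  nra.
Qed.

End NonlinearFlux.

(** * Estimates of the individual terms *)

Ltac close_with P :=
  match type of P with ?X <= ?Y =>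
  match goal with |- ?L <= ?R =>
    let H := fresh in assert (H : L - R = X - Y) by (unfold_grid; field; lra); lra
  end end.

Ltac le_by_telescope G T :=
  apply Rle_trans with (sumZ G);
  [ apply (sumZ_le_telescope _ _ T);
      [summable_tac | summable_tac | cbv beta; summable_tac | intros j]
  | sumZ_linear; right; ring ].

Lemma sumZ_cross_le (f g : seqZ) : in_l2 f -> in_l2 g ->
  sumZ (fun j => -2 * f j * g j) <= sumZ (fun j => f j ^ 2) + sumZ (fun j => g j ^ 2).
Proof.
  intros Hf Hg; rewrite <- sumZ_plus by summable_tac.
  apply sumZ_le; [summable_tac | summable_tac | intros j].
  pose proof (pow2_ge_0 (f j + g j)); nra.
Qed.

Lemma sumZ_sq_add_le (h : R) (f g : seqZ) : 0 < h -> in_l2 f -> in_l2 g ->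
  sumZ (fun j => (f j + g j) ^ 2)
  <= (1 + h / 2) * sumZ (fun j => f j ^ 2) + (1 + 2 / h) * sumZ (fun j => g j ^ 2).
Proof.
  intros Hh Hf Hg; rewrite <- !sumZ_scal, <- sumZ_plus by summable_tac.
  apply sumZ_le; [summable_tac | summable_tac | intros j; apply sq_plus_le_weighted, Hh].
Qed.

Section TermEstimates.

Variables (h U Up Um E : R) (a w : seqZ).
Hypotheses (Hh : 0 < h) (Ha : in_l2 a) (Hw : boundedZ w).
Hypothesis HE : forall j, Rabs (a j) <= E.
Hypothesis HU : forall j, Rabs (w j) <= U.
Hypothesis HUp : forall j, Rabs (Dp h w j) <= Up.
Hypothesis HUm : forall j, Rabs (Dm h w j) <= Um.

Lemma Dc_w_le (j : Z) : Rabs (Dc h w j) <= Up.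
Proof.
  apply Rabs_half_sum_le; [apply HUp|].
  replace (Dm h w j) with (Dp h w (j - 1)%Z) by (unfold Dp, Dm; do 3 f_equal; lia).
  apply HUp.
Qed.

Lemma avgc_w_le (j : Z) : Rabs (avgc w j) <= U.
Proof. apply Rabs_half_sum_le; apply HU. Qed.

Lemma avgc_w_diff_succ_le (j : Z) : Rabs (avgc w (j + 1)%Z - avgc w j) <= h * Um.
Proof.
  replace (avgc w (j + 1)%Z - avgc w j) with (h * ((Dm h w (j + 2)%Z + Dm h w j) / 2))
    by (unfold_grid; field; lra).
  rewrite Rabs_mult, (Rabs_right h) by lra.
  apply Rmult_le_compat_l; [lra | apply Rabs_half_sum_le; apply HUm].
Qed.

Lemma avgc_w_diff_pred_le (j : Z) : Rabs (avgc w j - avgc w (j - 1)%Z) <= h * Up.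
Proof.
  replace (avgc w j - avgc w (j - 1)%Z) with (h * ((Dp h w j + Dp h w (j - 2)%Z) / 2))
    by (unfold_grid; field; lra).
  rewrite Rabs_mult, (Rabs_right h) by lra.
  apply Rmult_le_compat_l; [lra | apply Rabs_half_sum_le; apply HUp].
Qed.

Lemma sumZ_Dc_cube_le :
  h * sumZ (fun j => Dc h a j ^ 3) <= E * sumZ (fun j => Dc h a j ^ 2).
Proof.
  rewrite <- !sumZ_scal; apply sumZ_le; [summable_tac | summable_tac | intros j].
  replace (h * Dc h a j ^ 3) with (h * Dc h a j * Dc h a j ^ 2) by ring.
  apply mul_sq_le_abs.
  replace (h * Dc h a j) with ((a (j + 1)%Z + - a (j - 1)%Z) / 2) by (unfold_grid; field; lra).
  apply Rabs_half_sum_le; [|rewrite Rabs_Ropp]; apply HE.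
Qed.

Lemma sumZ_mul_Dc_wa_le :
  sumZ (fun j => -2 * a j * Dc h (fun i => w i * a i) j) <= Up * sumZ (fun j => a j ^ 2).
Proof.
  le_by_telescope (fun j => Up * a j ^ 2)
    (fun i => Up * a i ^ 2 / 2 - a (i - 1)%Z * a i * w (i - 1)%Z / h).
  pose proof (young_abs (- Dp h w j) Up (a j) (a (j + 1)%Z)) as P.
  rewrite Rabs_Ropp in P; specialize (P (HUp j)).
  close_with P.
Qed.

Lemma sumZ_DpDm_mul_Dc_wa_le :
  sumZ (fun j => - Dp h (Dm h a) j * Dc h (fun i => w i * a i) j)
  <= 2 * Up / h ^ 2 * sumZ (fun j => a j ^ 2).
Proof.
  le_by_telescope (fun j => 2 * Up / h ^ 2 * a j ^ 2)
    (fun i => Up * (2 * a i ^ 2 + a (i + 1)%Z ^ 2) / (2 * h ^ 2)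
              + (2 * a (i - 1)%Z * a i * w (i - 1)%Z - a (i - 1)%Z * a (i + 1)%Z * w (i - 1)%Z
                 + a (i - 1)%Z * a (i + 1)%Z * w (i + 1)%Z - a (i - 1)%Z ^ 2 * w (i - 1)%Z
                 - a i ^ 2 * w i) / (2 * h ^ 3)).
  pose proof (young_abs (- Dc h w (j + 1)%Z) Up (a j) (a (j + 2)%Z)) as P1.
  pose proof (young_abs (Dp h w j) Up (a j) (a (j + 1)%Z) (HUp j)) as P2.
  rewrite Rabs_Ropp in P1; specialize (P1 (Dc_w_le _)).
  pose proof (Rplus_le_compat _ _ _ _ P1 P2) as P.
  apply (Rmult_le_compat_l (/ h ^ 2)) in P; [| left; apply Rinv_0_lt_compat, pow_lt; lra].
  close_with P.
Qed.

Lemma sumZ_D3_avgc_w_Dc_le :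
  sumZ (fun j => 2 * D3 h a j * avgc w j * Dc h a j)
  <= 2 * U * sumZ (fun j => Dp h (Dc h a) j ^ 2)
     + (h * Um / 2 + Up) * sumZ (fun j => Dp h (Dm h a) j ^ 2)
     + Up * sumZ (fun j => Dp h a j ^ 2).
Proof.
  le_by_telescope
    (fun j => 2 * U * Dp h (Dc h a) j ^ 2 + (h * Um / 2 + Up) * Dp h (Dm h a) j ^ 2
              + Up * Dp h a j ^ 2)
    (fun i => - 2 * U * Dp h (Dc h a) (i - 1)%Z ^ 2
              - Up / 2 * (Dp h a (i - 2)%Z ^ 2 + 2 * Dp h a (i - 1)%Z ^ 2)
              - avgc w i * Dp h (Dm h a) (i - 1)%Z ^ 2 / 2
              + 2 / h * avgc w (i - 1)%Z * Dc h a (i - 1)%Z * Dp h (Dm h a) i).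
  pose proof (dispersive_transport_le h U Up Um (Dp h (Dm h a) (j - 1)%Z) (Dp h (Dm h a) j)
                (avgc w (j - 1)%Z) (avgc w j) (avgc w (j + 1)%Z)
                (Dp h a (j - 1)%Z) (Dp h a (j - 2)%Z)
                Hh (avgc_w_le j) (avgc_w_diff_succ_le j) (avgc_w_diff_pred_le j)) as P.
  close_with P.
Qed.

Lemma sumZ_D3_avgc_Dc_w_le (k : R) : 0 < k ->
  sumZ (fun j => 2 * D3 h a j * avgc a j * Dc h w j)
  <= k * Up * sumZ (fun j => D3 h a j ^ 2) + Up / k * sumZ (fun j => a j ^ 2).
Proof.
  intros Hk.
  le_by_telescope (fun j => k * Up * D3 h a j ^ 2 + Up / k * a j ^ 2)
    (fun i => Up * (a i ^ 2 - a (i - 1)%Z ^ 2) / (2 * k)).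
  pose proof (dispersive_advection_le k Up (D3 h a j) (a (j + 1)%Z) (a (j - 1)%Z) (Dc h w j)
                Hk (Dc_w_le j)) as P.
  close_with P.
Qed.

Lemma sumZ_D3_avgc_Dc_le :
  sumZ (fun j => 2 * D3 h a j * avgc a j * Dc h a j)
  <= 2 * E * sumZ (fun j => Dp h (Dc h a) j ^ 2) + 7 * E * sumZ (fun j => Dp h (Dm h a) j ^ 2).
Proof.
  let T := constr:(fun A B C D : R =>
    (2 * E * (58 * B * C + 6 * B * D - 67 * B ^ 2 + 70 * A * B - 26 * A * C - 6 * A * D
              - 19 * A ^ 2 + 6 * C * D - 19 * C ^ 2 - 3 * D ^ 2)
     + 12 * B * C * D + 3 * B * C ^ 2 + 12 * B ^ 2 * C - 12 * B ^ 2 * D - 4 * B ^ 3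
     - 6 * A * B * C + 12 * A * B * D - 12 * A * B ^ 2 - 6 * A * C * D + 6 * A * C ^ 2
     + 15 * A ^ 2 * B + 6 * A ^ 2 * C - 9 * A ^ 2 * D - 6 * A ^ 3 + 3 * C ^ 2 * D
     - 14 * C ^ 3) / (12 * h ^ 4)) in
  le_by_telescope (fun j => 2 * E * Dp h (Dc h a) j ^ 2 + 7 * E * Dp h (Dm h a) j ^ 2)
    (fun i => T (a (i - 2)%Z) (a (i - 1)%Z) (a i) (a (i + 1)%Z)).
  pose proof (dispersive_self_le h E (a (j - 2)%Z) (a (j - 1)%Z) (a j) (a (j + 1)%Z) (a (j + 2)%Z)
                Hh (HE _) (HE _) (HE _) (HE _) (HE _)) as P.
  cbv zeta in P; close_with P.
Qed.

Lemma sumZ_DpDm_mul_le (c : R) (e : seqZ) : in_l2 e ->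
  sumZ (fun j => - c * h * Dp h (Dm h a) j * e j)
  <= 2 / h * (c ^ 2 * sumZ (fun j => a j ^ 2) + sumZ (fun j => e j ^ 2)).
Proof.
  intros He.
  le_by_telescope (fun j => 2 / h * c ^ 2 * a j ^ 2 + 2 / h * e j ^ 2)
    (fun i => c ^ 2 * (a i ^ 2 - a (i - 1)%Z ^ 2) / (2 * h)).
  pose proof (viscous_cross_le h c (a (j - 1)%Z) (a j) (a (j + 1)%Z) (e j) Hh) as P.
  close_with P.
Qed.

Lemma sumZ_flux_sq_le (k : R) : 0 < k ->
  (1 + h / 2) * sumZ (fun j => flux h w a j ^ 2)
  <= ((U + E) ^ 2 + h * E ^ 2) * sumZ (fun j => Dc h a j ^ 2)
     + (U ^ 2 * (1 / k + 1 / h) + Up / h * (2 * E / 3 + 3 * U / 2) + Up ^ 2 * k / h ^ 2)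
       * sumZ (fun j => a j ^ 2).
Proof.
  intros Hk; rewrite <- sumZ_scal.
  set (K := U ^ 2 * (1 / k + 1 / h) + Up / h * (2 * E / 3 + 3 * U / 2) + Up ^ 2 * k / h ^ 2).
  le_by_telescope (fun j => ((U + E) ^ 2 + h * E ^ 2) * Dc h a j ^ 2 + K * a j ^ 2)
    (fun i => K * (a i ^ 2 - a (i - 1)%Z ^ 2) / 2).
  assert (Hd : Rabs (w (j + 1)%Z - w (j - 1)%Z) <= 2 * h * Up).
  { replace (w (j + 1)%Z - w (j - 1)%Z) with (2 * h * Dc h w j) by (unfold_grid; field; lra).
    rewrite Rabs_mult, (Rabs_right (2 * h)) by lra.
    apply Rmult_le_compat_l; [lra | apply Dc_w_le]. }
  pose proof (flux_difference_sq_le h k U E Hh Hk Up (a (j + 1)%Z) (a (j - 1)%Z)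
                (w (j + 1)%Z) (w (j - 1)%Z) (HE _) (HE _) (HU _) (HU _) Hd) as P.
  unfold K; close_with P.
Qed.

End TermEstimates.

(** * The energy inequality *)

Lemma Dc_sq_half_sub (h : R) (v w : seqZ) (j : Z) : 0 < h ->
  Dc h (fun i => v i ^ 2 / 2) j - Dc h (fun i => w i ^ 2 / 2) j = flux h w (fun i => v i - w i) j.
Proof. intros; unfold_grid; field; lra. Qed.

Lemma Dc_product_rule (h : R) (w a : seqZ) (j : Z) : 0 < h ->
  Dc h (fun i => w i * a i) j
  = avgc w j * Dc h a j + avgc a j * Dc h w j + avgc a j * Dc h a j - Dc h (fun i => a i ^ 2 / 2) j.
Proof. intros; unfold_grid; field; lra. Qed.

Lemma Atheta_error_step (dt dx c th : R) (v w : nat -> seqZ) (n : nat) (j : Z) :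
  0 < dt -> 0 < dx -> scheme dt dx c th v ->
  let a := fun i => v n i - w n i in
  Atheta dx dt th (fun i => v (S n) i - w (S n) i) j
  = a j - dt * flux dx (w n) a j - (1 - th) * dt * D3 dx a j
    + c * dx * dt / 2 * Dp dx (Dm dx a) j - dt * cons_err dt dx c th w n j.
Proof.
  intros Hdt Hdx Hsch a.
  assert (Hv : v (S n) j = v n j + dt * (c * dx / 2 * Dp dx (Dm dx (v n)) j
                 - Dc dx (fun i => v n i ^ 2 / 2) j - th * D3 dx (v (S n)) j
                 - (1 - th) * D3 dx (v n) j))
    by (rewrite <- (Hsch n j); field; lra).
  unfold a; rewrite <- Dc_sq_half_sub by exact Hdx.
  unfold Atheta, cons_err; rewrite Hv.
  replace (D3 dx (fun i => v (S n) i - w (S n) i) j) with (D3 dx (v (S n)) j - D3 dx (w (S n)) j)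
    by (unfold_grid; field; lra).
  replace (D3 dx (fun i => v n i - w n i) j) with (D3 dx (v n) j - D3 dx (w n) j)
    by (unfold_grid; field; lra).
  replace (Dp dx (Dm dx (fun i => v n i - w n i)) j)
    with (Dp dx (Dm dx (v n)) j - Dp dx (Dm dx (w n)) j) by (unfold_grid; field; lra).
  field; lra.
Qed.

Lemma sumZ_error_step_sq_expand (h k c th : R) (a w e : seqZ) :
  0 < h -> in_l2 a -> boundedZ w -> in_l2 e ->
  sumZ (fun j => (a j - k * flux h w a j - (1 - th) * k * D3 h a j
                  + c * h * k / 2 * Dp h (Dm h a) j - k * e j) ^ 2)
  = sumZ (fun j => (a j - (1 - th) * k * D3 h a j) ^ 2)
    + c ^ 2 * h ^ 2 * k ^ 2 / 4 * sumZ (fun j => Dp h (Dm h a) j ^ 2)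
    + k ^ 2 * sumZ (fun j => (flux h w a j + e j) ^ 2)
    + c * h * k * sumZ (fun j => a j * Dp h (Dm h a) j)
    - (1 - th) * c * h * k ^ 2 * sumZ (fun j => D3 h a j * Dp h (Dm h a) j)
    + k * sumZ (fun j => -2 * a j * Dc h (fun i => w i * a i) j)
    - 2 * k * sumZ (fun j => a j * Dc h (fun i => a i ^ 2 / 2) j)
    + (1 - th) * k ^ 2 * (sumZ (fun j => 2 * D3 h a j * avgc w j * Dc h a j)
                          + sumZ (fun j => 2 * D3 h a j * avgc a j * Dc h w j)
                          + sumZ (fun j => 2 * D3 h a j * avgc a j * Dc h a j))
    + k * sumZ (fun j => -2 * (a j - (1 - th) * k * D3 h a j) * e j)
    + c * h * k ^ 2 * sumZ (fun j => - Dp h (Dm h a) j * Dc h (fun i => w i * a i) j)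
    - c * h * k ^ 2 * sumZ (fun j => Dp h (Dm h a) j * Dc h (fun i => a i ^ 2 / 2) j)
    + k ^ 2 * sumZ (fun j => - c * h * Dp h (Dm h a) j * e j).
Proof.
  intros Hh Ha Hw He.
  (* Recorded once, so that [sumZ_linear] does not re-derive them for every partial sum. *)
  assert (S1 : summableZ (fun j => (a j - (1 - th) * k * D3 h a j) ^ 2)) by summable_tac.
  assert (S2 : summableZ (fun j => Dp h (Dm h a) j ^ 2)) by summable_tac.
  assert (S3 : summableZ (fun j => (flux h w a j + e j) ^ 2)) by summable_tac.
  assert (S4 : summableZ (fun j => a j * Dp h (Dm h a) j)) by summable_tac.
  assert (S5 : summableZ (fun j => D3 h a j * Dp h (Dm h a) j)) by summable_tac.
  assert (S6 : summableZ (fun j => -2 * a j * Dc h (fun i => w i * a i) j)) by summable_tac.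
  assert (S7 : summableZ (fun j => a j * Dc h (fun i => a i ^ 2 / 2) j)) by summable_tac.
  assert (S8 : summableZ (fun j => 2 * D3 h a j * avgc w j * Dc h a j)) by summable_tac.
  assert (S9 : summableZ (fun j => 2 * D3 h a j * avgc a j * Dc h w j)) by summable_tac.
  assert (S10 : summableZ (fun j => 2 * D3 h a j * avgc a j * Dc h a j)) by summable_tac.
  assert (S11 : summableZ (fun j => -2 * (a j - (1 - th) * k * D3 h a j) * e j)) by summable_tac.
  assert (S12 : summableZ (fun j => - Dp h (Dm h a) j * Dc h (fun i => w i * a i) j))
    by summable_tac.
  assert (S13 : summableZ (fun j => Dp h (Dm h a) j * Dc h (fun i => a i ^ 2 / 2) j))
    by summable_tac.
  assert (S14 : summableZ (fun j => - c * h * Dp h (Dm h a) j * e j)) by summable_tac.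
  transitivity (sumZ (fun j => (a j - (1 - th) * k * D3 h a j) ^ 2
      + c ^ 2 * h ^ 2 * k ^ 2 / 4 * Dp h (Dm h a) j ^ 2
      + k ^ 2 * (flux h w a j + e j) ^ 2
      + c * h * k * (a j * Dp h (Dm h a) j)
      - (1 - th) * c * h * k ^ 2 * (D3 h a j * Dp h (Dm h a) j)
      + k * (-2 * a j * Dc h (fun i => w i * a i) j)
      - 2 * k * (a j * Dc h (fun i => a i ^ 2 / 2) j)
      + (1 - th) * k ^ 2 * (2 * D3 h a j * avgc w j * Dc h a j)
      + (1 - th) * k ^ 2 * (2 * D3 h a j * avgc a j * Dc h w j)
      + (1 - th) * k ^ 2 * (2 * D3 h a j * avgc a j * Dc h a j)
      + k * (-2 * (a j - (1 - th) * k * D3 h a j) * e j)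
      + c * h * k ^ 2 * (- Dp h (Dm h a) j * Dc h (fun i => w i * a i) j)
      - c * h * k ^ 2 * (Dp h (Dm h a) j * Dc h (fun i => a i ^ 2 / 2) j)
      + k ^ 2 * (- c * h * Dp h (Dm h a) j * e j))).
  { apply sumZ_ext; intros j; unfold flux; rewrite Dc_product_rule by exact Hh; field; lra. }
  sumZ_linear.
  ring.
Qed.

Lemma cfl_sumZ_D3_sq_le (h k th : R) (a : seqZ) :
  0 < h -> 0 < k -> 0 <= th < 1 / 2 -> k * (1 - 2 * th) <= h ^ 3 / 4 -> in_l2 a ->
  (1 - 2 * th) * k ^ 2 * sumZ (fun j => D3 h a j ^ 2)
  <= k * h * sumZ (fun j => Dp h (Dm h a) j ^ 2).
Proof.
  intros Hh Hk Hth Hcfl Ha; rewrite (sumZ_D3_sq h a Hh Ha).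
  set (Q := sumZ (fun j => Dp h (Dm h a) j ^ 2)); set (Rr := sumZ (fun j => Dp h (Dc h a) j ^ 2)).
  assert (HQ : 0 <= Q) by (apply sumZ_nonneg; [summable_tac | intros; apply pow2_ge_0]).
  assert (HR : 0 <= Rr) by (apply sumZ_nonneg; [summable_tac | intros; apply pow2_ge_0]).
  apply Rle_trans with (k * (1 - 2 * th) * (4 * k / h ^ 2) * Q).
  - replace (k * (1 - 2 * th) * (4 * k / h ^ 2) * Q) with ((1 - 2 * th) * k ^ 2 * (4 / h ^ 2 * Q))
      by (field; lra).
    apply Rmult_le_compat_l; [nonneg|].
    apply Rmult_le_compat_l; [nonneg | lra].
  - apply Rle_trans with (h ^ 3 / 4 * (4 * k / h ^ 2) * Q); [|right; field; lra].
    apply Rmult_le_compat_r; [lra|]; apply Rmult_le_compat_r; nonneg.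
Qed.

Lemma energy_estimate (h k c th U Up Um E X : R) (a w e : seqZ) :
  0 < h -> 0 < k -> 0 < c -> 0 <= th < 1 / 2 -> k * (1 - 2 * th) <= h ^ 3 / 4 ->
  in_l2 a -> boundedZ w -> in_l2 e ->
  (forall j, Rabs (a j) <= E) -> (forall j, Rabs (w j) <= U) ->
  (forall j, Rabs (Dp h w j) <= Up) -> (forall j, Rabs (Dm h w j) <= Um) -> 7 * E <= X ->
  sumZ (fun j => (a j - k * flux h w a j - (1 - th) * k * D3 h a j
                  + c * h * k / 2 * Dp h (Dm h a) j - k * e j) ^ 2)
  <= sumZ (fun j => (a j + th * k * D3 h a j) ^ 2) * (1 + Ea k h c U Up E * k)
     + k * sumZ (fun j => e j ^ 2) * (1 + 4 * k / h + k)
     + k * sumZ (fun j => Cb k h c th Up a j * Dp h a j ^ 2)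
     + k ^ 2 * Cc h c U E * sumZ (fun j => Dc h a j ^ 2)
     + k * Cd k h c th Up Um X * sumZ (fun j => Dp h (Dm h a) j ^ 2)
     + k * Ce k h c th U Up E X * sumZ (fun j => Dp h (Dc h a) j ^ 2).
Proof.
  intros Hh Hk Hc Hth Hcfl Ha Hw He HE HU HUp HUm HX.
  pose proof (Rle_trans _ _ _ (Rabs_pos _) (HE 0%Z)) as E0.
  pose proof (Rle_trans _ _ _ (Rabs_pos _) (HU 0%Z)) as U0.
  pose proof (Rle_trans _ _ _ (Rabs_pos _) (HUp 0%Z)) as Up0.
  pose proof (Rle_trans _ _ _ (Rabs_pos _) (HUm 0%Z)) as Um0.
  assert (Hsq : forall f, in_l2 f -> 0 <= sumZ (fun j => f j ^ 2))
    by (intros f Hf; apply sumZ_nonneg; [exact Hf | intros; apply pow2_ge_0]).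
  pose proof (Hsq a Ha) as N0.
  pose proof (Hsq (Dp h (Dm h a)) ltac:(l2_tac)) as NQ.
  pose proof (Hsq (D3 h a) ltac:(l2_tac)) as N3.
  pose proof (cfl_sumZ_D3_sq_le h k th a Hh Hk Hth Hcfl Ha) as HD.
  pose proof (sumZ_cross_le (fun j => a j - (1 - th) * k * D3 h a j) e ltac:(l2_tac) He) as HZe.
  pose proof (sumZ_sq_add_le h (flux h w a) e Hh ltac:(l2_tac) He) as HNe.
  pose proof (sumZ_Dc_cube_le h E a Hh Ha HE) as HC3.
  pose proof (sumZ_mul_Dc_wa_le h Up a w Hh Ha Hw HUp) as HG2.
  pose proof (sumZ_DpDm_mul_Dc_wa_le h Up a w Hh Ha Hw HUp) as HG5.
  pose proof (sumZ_D3_avgc_w_Dc_le h U Up Um a w Hh Ha Hw HU HUp HUm) as HH1.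
  pose proof (sumZ_D3_avgc_Dc_w_le h Up a w Hh Ha Hw HUp k Hk) as HH2.
  pose proof (sumZ_D3_avgc_Dc_le h E a Hh Ha HE) as HH3.
  pose proof (sumZ_DpDm_mul_le h a Hh Ha c e He) as HI3.
  pose proof (sumZ_flux_sq_le h U Up E a w Hh Ha Hw HE HU HUp k Hk) as HN.
  assert (HCb : sumZ (fun j => Cb k h c th Up a j * Dp h a j ^ 2)
                = h / 6 * (h - c * k) * sumZ (fun j => Dp h a j ^ 3)
                  + (- c * (h - c * k) + (1 - th) * k * Up) * sumZ (fun j => Dp h a j ^ 2)).
  { rewrite (sumZ_ext _ (fun j => h / 6 * (h - c * k) * Dp h a j ^ 3
                                  + (- c * (h - c * k) + (1 - th) * k * Up) * Dp h a j ^ 2))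
      by (intros; unfold Cb; ring).
    sumZ_linear; ring. }
  rewrite sumZ_error_step_sq_expand, HCb by assumption; cbv beta in HZe.
  rewrite (sumZ_ext (fun j => (a j - (1 - th) * k * D3 h a j) ^ 2)
                    (fun j => (a j + - ((1 - th) * k) * D3 h a j) ^ 2)) in HZe |- *
    by (intros; ring).
  rewrite (sumZ_mul_DpDm h a Hh Ha), (sumZ_D3_mul_DpDm h a Hh Ha), (sumZ_mul_Dc_sq h a Hh Ha),
    (sumZ_DpDm_mul_Dc_sq h a Hh Ha), !(sumZ_sq_add_D3 h a Hh Ha) in *.
  rewrite (sumZ_D3_sq h a Hh Ha), (sumZ_Dp_sq h a Hh Ha) in *.
  set (A0 := sumZ (fun j => a j ^ 2)) in *.
  set (Q := sumZ (fun j => Dp h (Dm h a) j ^ 2)) in *.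
  set (Rr := sumZ (fun j => Dp h (Dc h a) j ^ 2)) in *.
  set (SD := sumZ (fun j => Dc h a j ^ 2)) in *.
  set (Se := sumZ (fun j => e j ^ 2)) in *.
  set (C3 := sumZ (fun j => Dc h a j ^ 3)) in *.
  set (Fl := sumZ (fun j => flux h w a j ^ 2)) in *.
  set (G2 := sumZ (fun j => -2 * a j * Dc h (fun i => w i * a i) j)) in *.
  set (G5 := sumZ (fun j => - Dp h (Dm h a) j * Dc h (fun i => w i * a i) j)) in *.
  set (H1 := sumZ (fun j => 2 * D3 h a j * avgc w j * Dc h a j)) in *.
  set (H2 := sumZ (fun j => 2 * D3 h a j * avgc a j * Dc h w j)) in *.
  set (H3 := sumZ (fun j => 2 * D3 h a j * avgc a j * Dc h a j)) in *.
  set (I1 := sumZ (fun j => -2 * (a j - (1 - th) * k * D3 h a j) * e j)) in *.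
  set (I3 := sumZ (fun j => - c * h * Dp h (Dm h a) j * e j)) in *.
  set (Ne := sumZ (fun j => (flux h w a j + e j) ^ 2)) in *.
  set (D33 := 4 / h ^ 2 * (Q - Rr)) in *.
  set (AZ := A0 + - ((1 - th) * k) * h * Q + (- ((1 - th) * k)) ^ 2 * D33) in *.
  set (AQ := A0 + th * k * h * Q + (th * k) ^ 2 * D33) in *.
  set (K := U ^ 2 * (1 / k + 1 / h) + Up / h * (2 * E / 3 + 3 * U / 2) + Up ^ 2 * k / h ^ 2) in *.
  set (sq := sqrt 2 * sqrt k / sqrt h).
  assert (sq0 : 0 <= sq)
    by (unfold sq; apply Rmult_le_pos; [apply Rmult_le_pos; apply sqrt_pos
                                       | left; apply Rinv_0_lt_compat, sqrt_lt_R0; lra]).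
  assert (sqh : sqrt h <> 0) by (apply Rgt_not_eq, sqrt_lt_R0; lra).
  unfold Ea, Cc, Cd, Ce; fold sq.
  set (coefA := Up * (2 - th) + 2 * c * Up * k / h + 2 * c ^ 2 * k / h + U ^ 2 * (1 + k / h)
                + Up * k / h * (2 * E / 3 + 3 * U / 2) + Up ^ 2 * k ^ 2 / h ^ 2).
  (* Each summand is a nonnegative factor times the slack of one of the estimates above;
     the last four are nonnegative by the CFL condition, [AQ >= A0], [AQ >= 0] and [7 E <= X]. *)
  match goal with |- ?L <= ?R => cut (0 <= R - L); [lra|] end.
  match goal with |- 0 <= ?D => replace D with
    (k * (Up * A0 - G2)
     + c * h * k ^ 2 * (2 * Up / h ^ 2 * A0 - G5)
     + (1 - th) * k ^ 2 * (2 * U * Rr + (h * Um / 2 + Up) * Q + Up * (SD + h ^ 2 / 4 * Q) - H1)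
     + (1 - th) * k ^ 2 * (k * Up * D33 + Up / k * A0 - H2)
     + (1 - th) * k ^ 2 * (2 * E * Rr + 7 * E * Q - H3)
     + 2 / 3 * c * k ^ 2 * (E * SD - h * C3)
     + k * (AZ + Se - I1)
     + k ^ 2 * (2 / h * (c ^ 2 * A0 + Se) - I3)
     + k ^ 2 * ((1 + h / 2) * Fl + (1 + 2 / h) * Se - Ne)
     + k ^ 2 * (((U + E) ^ 2 + h * E ^ 2) * SD + K * A0 - (1 + h / 2) * Fl)
     + k * (AQ - AZ)
     + k * coefA * (AQ - A0)
     + k * (Up * (5 + th) + Up ^ 2 * sq) * AQ
     + (1 - th) * k ^ 2 * ((X - 7 * E) * Q))
    by (unfold AQ, AZ, D33, K, coefA, sq; field; repeat split; lra) end.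
  assert (0 <= AQ - AZ) by (unfold AQ, AZ; nra).
  assert (0 <= AQ - A0).
  { assert (0 <= th * k * h * Q) by nonneg.
    assert (0 <= (th * k) ^ 2 * D33) by nonneg.
    unfold AQ; lra. }
  repeat apply Rplus_le_le_0_compat; apply Rmult_le_pos; nonneg.
Qed.

Lemma Xc_ge (dx g E : R) : 0 < dx -> 0 <= E -> 7 * E <= Xc dx g E.
Proof.
  intros Hdx HE; unfold Xc; set (A := Rpower dx (1 / 2 - g)).
  assert (HA : 0 < A) by (unfold A, Rpower; apply exp_pos).
  replace (g - 1 / 2) with (- (1 / 2 - g)) by ring; rewrite Rpower_Ropp; fold A.
  assert (6 * E <= A + 9 * E ^ 2 * / A).
  { apply Rmult_le_reg_r with A; [exact HA|].
    replace ((A + 9 * E ^ 2 * / A) * A) with (A ^ 2 + 9 * E ^ 2) by (field; lra).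
    pose proof (pow2_ge_0 (A - 3 * E)); nra. }
  lra.
Qed.

Lemma normD_sq (dx : R) (f : seqZ) :
  0 < dx -> in_l2 f -> normD dx f ^ 2 = dx * sumZ (fun j => f j ^ 2).
Proof.
  intros Hdx Hf; unfold normD, innerD.
  rewrite (sumZ_ext (fun j => f j * f j) (fun j => f j ^ 2)) by (intros; ring).
  apply pow2_sqrt, Rmult_le_pos; [lra | apply sumZ_nonneg; [exact Hf | intros; apply pow2_ge_0]].
Qed.

Theorem corollary4
  (s : nat) (u0 : R -> R) (u : R -> R -> R) (T c dt dx th : R)
  (v : nat -> seqZ) (n : nat) (g : R) :
  Hs s u0 ->
  KdV_solution s T u0 u ->
  0 < T -> 0 < c -> 0 < dt -> 0 < dx ->
  0 <= th < 1/2 ->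
  dt * (1 - 2 * th) <= dx ^ 3 / 4 ->
  (forall j, v O j = avg0 dx u0 j) ->
  scheme dt dx c th v ->
  (n < Nsteps T dt)%nat ->
  0 <= g < 1/2 ->
  let w := uavg T dt dx u0 u in
  let e := fun m j => v m j - w m j in
  let eps := cons_err dt dx c th w n in
  (* finiteness of the quantities involved (s large enough) *)
  in_l2 (e n) -> in_l2 (e (S n)) -> in_l2 eps -> boundedZ (w n) ->
  let U := norminf (w n) in
  let Up := norminf (Dp dx (w n)) in
  let Um := norminf (Dm dx (w n)) in
  let E := norminf (e n) in
  let X := Xc dx g E in
  normD dx (Atheta dx dt th (e (S n))) ^ 2
  <= normD dx (Atheta dx dt th (e n)) ^ 2 * (1 + Ea dt dx c U Up E * dt)
     + dt * normD dx eps ^ 2 * (1 + 4 * dt / dx + dt)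
     + dt * innerD dx (Cb dt dx c th Up (e n)) (fun j => (Dp dx (e n) j) ^ 2)
     + dt ^ 2 * Cc dx c U E * normD dx (Dc dx (e n)) ^ 2
     + dt * Cd dt dx c th Up Um X * normD dx (Dp dx (Dm dx (e n))) ^ 2
     + dt * Ce dt dx c th U Up E X * normD dx (Dp dx (Dc dx (e n))) ^ 2.
Proof.
  intros _ _ _ Hc Hdt Hdx Hth Hcfl _ Hsch _ _ w e eps Ha Ha' Heps Hw U Up Um E X.
  set (a := e n) in *.
  assert (HE : forall j, Rabs (a j) <= E) by (apply norminf_ge, l2_boundedZ, Ha).
  pose proof (Rle_trans _ _ _ (Rabs_pos _) (HE 0%Z)) as E0.
  pose proof (energy_estimate dx dt c th U Up Um E X a (w n) eps Hdx Hdt Hc Hth Hcfl Ha Hw Heps HE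
                (norminf_ge _ Hw) (norminf_ge _ (boundedZ_Dp _ _ Hw))
                (norminf_ge _ (boundedZ_Dm _ _ Hw)) (Xc_ge dx g E Hdx E0)) as Hest.
  assert (Hstep : forall j, Atheta dx dt th (e (S n)) j
            = a j - dt * flux dx (w n) a j - (1 - th) * dt * D3 dx a j
              + c * dx * dt / 2 * Dp dx (Dm dx a) j - dt * eps j)
    by (intros j; exact (Atheta_error_step dt dx c th v w n j Hdt Hdx Hsch)).
  unfold Atheta in *; unfold innerD.
  rewrite !normD_sq by (first [assumption | l2_tac]).
  rewrite (sumZ_ext _ _ (fun j => f_equal (fun x => x ^ 2) (Hstep j))).
  apply (Rmult_le_compat_l dx) in Hest; [|lra].
  eapply Rle_trans; [exact Hest | right; ring].
Qed.
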